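(* Let $\alpha,a,b\in\mathbb{C}$ be such that none of $\alpha+a,\alpha-a,\alpha+b,\alpha-b$ belongs to $\{0,-1,-2,\ldots\}$. Then \[ \psi(\alpha+b)+\psi(\alpha-b)-\psi(\alpha+a)-\psi(\alpha-a)=\frac{(a^2-b^2)\bigl((1+\alpha)^2+\alpha^2-a^2-b^2\bigr)}{2(\alpha^2-a^2)(\alpha^2-b^2)}\; {}_8F_7\!\left(\left.{1,\,1,\,1\pm a\pm b,\,\frac{7+3\alpha}{5}\pm\sqrt{\frac{a^2+b^2}{5}-\left(\frac{1-\alpha}{5}\right)^2}\atop \frac32,\,1+\alpha\pm a,\,1+\alpha\pm b,\,\frac{2+3\alpha}{5}\pm\sqrt{\frac{a^2+b^2}{5}-\left(\frac{1-\alpha}{5}\right)^2}}\right|-\frac14\right). \]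
   Context: $\psi(z)=\frac{d}{dz}\log\Gamma(z)$ is the digamma function. ${}_pF_q\left(\left.{a_1,\ldots,a_p\atop b_1,\ldots,b_q}\right|z\right)=\sum_{n\ge0}\frac{(a_1)_n\cdots(a_p)_n}{(b_1)_n\cdots(b_q)_n}\frac{z^n}{n!}$ with $(x)_n=x(x+1)\cdots(x+n-1)$. A parameter written $u\pm v$ stands for the two parameters $u+v,u-v$, and $1\pm a\pm b$ stands for the four parameters $1+a+b,1+a-b,1-a+b,1-a-b$. *)

From Stdlib Require Import Reals List Factorial.
From Coquelicot Require Import Coquelicot.
Open Scope C_scope.

Definition natC (n : nat) : C := RtoC (INR n).

(** n^z for a positive integer n and complex z:  exp(z ln n)  *)
Definition cpow_nat (n : nat) (z : C) : C :=
  RtoC (exp (Re z * ln (INR n))) *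
  ((cos (Im z * ln (INR n)), sin (Im z * ln (INR n))) : C).

Fixpoint poch (x : C) (n : nat) : C :=
  match n with
  | O => 1
  | S m => poch x m * (x + natC m)
  end.

Definition gauss_seq (z : C) (n : nat) : C :=
  natC (fact n) * cpow_nat n z / poch z (S n).

(** Euler's Gamma function on C (Gauss limit formula; the limit exists
    for z not a nonpositive integer). *)
Definition Gamma (z : C) : C :=
  @lim C_CompleteNormedModule (filtermap (gauss_seq z) eventually).

Definition Gamma' (z : C) : C :=
  @lim C_CompleteNormedModule
    (filtermap (fun h : C => (Gamma (z + h) - Gamma z) / h) (@locally' C_UniformSpace (RtoC 0))).

Definition digamma (z : C) : C := Gamma' z / Gamma z.

Definition prodC (l : list C) : C := fold_right Cmult 1 l.

Definition hyp_term (As Bs : list C) (z : C) (n : nat) : C :=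
  prodC (map (fun a => poch a n) As) / prodC (map (fun b => poch b n) Bs)
  * (z ^ n) / natC (fact n).

Definition hypergeom (As Bs : list C) (z : C) : C :=
  @lim C_CompleteNormedModule
    (filtermap (fun N => @sum_n C_AbelianMonoid (hyp_term As Bs z) N) eventually).

Definition nonpos_int (x : C) : Prop := exists n : nat, x = - natC n.

(* The digamma function is read off Gauss' product
     Gamma z = (1/z) prod_{j>=0} ((j+2)/(j+1))^z (j+1)/(z+j+1),
   whose factors are 1 + O(1/j^2): controlling the ratio Gamma(z+h)/Gamma(z) up
   to O(h^2) gives psi z = - 1/z + sum_j (log((j+2)/(j+1)) - 1/(z+j+1)).
   Hence the left-hand side equals sum_{k>=0} r(alpha + k) with
   r x = 1/(x+a) + 1/(x-a) - 1/(x+b) - 1/(x-b) = (a^2-b^2)/2 F(0,x), where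
   F(n,x) = 2 (2x+n) B(n,x) and G(n,x) = P(n,x) B(n,x) / (2n+1) form a WZ pair:
   F(n,x) - F(n+1,x) = G(n,x) - G(n,x+1).  Summing over x = alpha + k and over n,
   and using that F(n,.) decays geometrically in n while G(n,alpha+K) -> 0 as
   K -> oo, gives sum_k F(0,alpha+k) = sum_n G(n,alpha).  The latter is the 8F7
   series at -1/4: the quadratic P(n,alpha) factors as
   5 (beta+s+n) (beta-s+n) with beta = (2+3 alpha)/5, which produces the
   parameters (7+3 alpha)/5 +- s over (2+3 alpha)/5 +- s. *)

From Stdlib Require Import Reals List Lra Lia ZArith Classical.
From Coquelicot Require Import Coquelicot.
Import ListNotations.

Open Scope R_scope.

Lemma Rabs_sub_le_of_deriv_bound (f f' : R -> R) (x M : R) :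
  (forall c, derivable_pt_lim f c (f' c)) ->
  (forall c, Rabs c <= Rabs x -> Rabs (f' c) <= M) ->
  Rabs (f x - f 0) <= M * Rabs x.
Proof.
  intros Hd Hb.
  destruct (Rtotal_order 0 x) as [Hx|[Hx|Hx]].
  - destruct (MVT_cor2 f f' 0 x Hx (fun c _ => Hd c)) as [c [Hc Hc2]].
    rewrite Hc, Rabs_mult. rewrite Rminus_0_r.
    apply Rmult_le_compat_r. apply Rabs_pos. apply Hb.
    rewrite !Rabs_pos_eq; lra.
  - subst. rewrite Rminus_diag, Rabs_R0. lra.
  - destruct (MVT_cor2 f f' x 0 Hx (fun c _ => Hd c)) as [c [Hc Hc2]].
    rewrite <- Rabs_Ropp, Ropp_minus_distr, Hc, Rabs_mult.
    replace (0 - x) with (- x) by ring. rewrite (Rabs_Ropp x).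
    apply Rmult_le_compat_r. apply Rabs_pos. apply Hb.
    rewrite (Rabs_left x) by lra. rewrite (Rabs_left c) by lra. lra.
Qed.

Lemma Rabs_sin_le t : Rabs (sin t) <= Rabs t.
Proof.
  pose proof (Rabs_sub_le_of_deriv_bound sin cos t 1 derivable_pt_lim_sin) as H.
  rewrite sin_0, Rminus_0_r, Rmult_1_l in H. apply H.
  intros c _. apply Rabs_le. pose proof (COS_bound c). lra.
Qed.

Lemma Rabs_cos_sub1_le_sqr t : Rabs (cos t - 1) <= Rabs t * Rabs t.
Proof.
  pose proof (Rabs_sub_le_of_deriv_bound cos (fun c => - sin c) t (Rabs t)) as H.
  rewrite cos_0 in H. apply H.
  - intros c. apply derivable_pt_lim_cos.
  - intros c Hc. rewrite Rabs_Ropp. eapply Rle_trans. apply Rabs_sin_le. exact Hc.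
Qed.

Lemma Rabs_cos_sub1_le t : Rabs (cos t - 1) <= Rabs t.
Proof.
  pose proof (Rabs_sub_le_of_deriv_bound cos (fun c => - sin c) t 1) as H.
  rewrite cos_0, Rmult_1_l in H. apply H.
  - intros c. apply derivable_pt_lim_cos.
  - intros c Hc. rewrite Rabs_Ropp. apply Rabs_le. pose proof (SIN_bound c). lra.
Qed.

Lemma Rabs_sin_sub_id_le t : Rabs (sin t - t) <= Rabs t * Rabs t.
Proof.
  pose proof (Rabs_sub_le_of_deriv_bound (fun u => sin u - u) (fun c => cos c - 1) t (Rabs t)) as H.
  simpl in H. rewrite sin_0, Rminus_0_r, Rminus_0_r in H. apply H.
  - intros c. apply derivable_pt_lim_minus. apply derivable_pt_lim_sin. apply derivable_pt_lim_id.
  - intros c Hc. eapply Rle_trans. apply Rabs_cos_sub1_le. exact Hc.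
Qed.

Lemma exp_le_exp_of_le x y : x <= y -> exp x <= exp y.
Proof. intros [H|H]. left; apply exp_increasing; exact H. right; rewrite H; reflexivity. Qed.

Lemma Rabs_exp_sub1_le t : Rabs (exp t - 1) <= Rabs t * exp (Rabs t).
Proof.
  pose proof (Rabs_sub_le_of_deriv_bound exp exp t (exp (Rabs t)) derivable_pt_lim_exp) as H.
  rewrite exp_0, Rmult_comm in H. apply H.
  intros c Hc. rewrite Rabs_pos_eq by (left; apply exp_pos).
  apply exp_le_exp_of_le. eapply Rle_trans; [apply Rle_abs | exact Hc].
Qed.

Lemma Rabs_exp_sub1_sub_id_le t : Rabs (exp t - 1 - t) <= Rabs t * Rabs t * exp (Rabs t).
Proof.
  pose proof (Rabs_sub_le_of_deriv_bound (fun u => exp u - 1 - u) (fun c => exp c - 1) t (Rabs t * exp (Rabs t))) as H.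
  simpl in H. rewrite exp_0 in H. replace (1 - 1 - 0) with 0 in H by ring. rewrite Rminus_0_r in H.
  replace (Rabs t * Rabs t * exp (Rabs t)) with (Rabs t * exp (Rabs t) * Rabs t) by ring.
  apply H.
  - intros c. apply derivable_pt_lim_minus. 
    replace (exp c) with (exp c - 0) by ring.
    apply derivable_pt_lim_minus. apply derivable_pt_lim_exp. apply derivable_pt_lim_const.
    apply derivable_pt_lim_id.
  - intros c Hc. eapply Rle_trans. apply Rabs_exp_sub1_le.
    apply Rmult_le_compat; try apply Rabs_pos; try (left; apply exp_pos); auto.
    apply exp_le_exp_of_le; exact Hc.
Qed.

Lemma exp_sub1_le s : (0 <= s)%R -> (exp s - 1 <= s * exp s)%R.
Proof. intros H. pose proof (Rabs_exp_sub1_le s). rewrite (Rabs_pos_eq s) in H0 by lra. pose proof (Rle_abs (exp s - 1)). lra. Qed.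

Lemma exp_sub1_sub_id_le s : (0 <= s)%R -> (exp s - 1 - s <= s * s * exp s)%R.
Proof. intros H. pose proof (Rabs_exp_sub1_sub_id_le s). rewrite (Rabs_pos_eq s) in H0 by lra. pose proof (Rle_abs (exp s - 1 - s)). lra. Qed.

Open Scope C_scope.

Definition cexp (u : C) : C := RtoC (exp (Re u)) * ((cos (Im u), sin (Im u)) : C).

Lemma C_ext (x y : C) : fst x = fst y -> snd x = snd y -> x = y.
Proof. destruct x, y; simpl; intros; subst; auto. Qed.

Lemma RtoC_pos_neq0 (r : R) : (0 < r)%R -> RtoC r <> 0.
Proof. intros Hr E. apply (f_equal fst) in E. simpl in E. lra. Qed.

Lemma cpow_nat_cexp n z : cpow_nat n z = cexp (z * RtoC (ln (INR n))).
Proof.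
  unfold cpow_nat, cexp.
  assert (E1 : Re (z * RtoC (ln (INR n))) = (Re z * ln (INR n))%R) by (destruct z; unfold Re; simpl; ring).
  assert (E2 : Im (z * RtoC (ln (INR n))) = (Im z * ln (INR n))%R) by (destruct z; unfold Im; simpl; ring).
  rewrite E1, E2. reflexivity.
Qed.

Lemma cexp_plus u v : cexp (u + v) = cexp u * cexp v.
Proof.
  unfold cexp, Re, Im. destruct u as [x y], v as [x' y']. simpl.
  rewrite exp_plus, cos_plus, sin_plus.
  apply C_ext; simpl; ring.
Qed.

Lemma cexp_0 : cexp 0 = 1.
Proof. unfold cexp, Re, Im; simpl. rewrite exp_0, cos_0, sin_0. apply C_ext; simpl; ring. Qed.

Lemma Cmod_le_Rabs_sum (a b : R) : (Cmod (a, b) <= Rabs a + Rabs b)%R.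
Proof.
  unfold Cmod. simpl. rewrite <- (sqrt_square (Rabs a + Rabs b)).
  apply sqrt_le_1_alt. rewrite !Rmult_1_r.
  pose proof (Rabs_pos a). pose proof (Rabs_pos b).
  replace (a*a)%R with (Rabs a * Rabs a)%R by (rewrite <- Rabs_mult; apply Rabs_pos_eq; nra).
  replace (b*b)%R with (Rabs b * Rabs b)%R by (rewrite <- Rabs_mult; apply Rabs_pos_eq; nra).
  nra.
  pose proof (Rabs_pos a). pose proof (Rabs_pos b). lra.
Qed.

Lemma Rabs_fst_le_Cmod (u : C) : (Rabs (fst u) <= Cmod u)%R.
Proof. eapply Rle_trans. 2: apply Rmax_Cmod. apply Rmax_l. Qed.
Lemma Rabs_snd_le_Cmod (u : C) : (Rabs (snd u) <= Cmod u)%R.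
Proof. eapply Rle_trans. 2: apply Rmax_Cmod. apply Rmax_r. Qed.

Lemma Rabs_exp_cos_sub_le x y :
  (Rabs (exp x * cos y - 1 - x) <= Rabs x * Rabs x * exp (Rabs x) + exp x * (Rabs y * Rabs y))%R.
Proof.
  replace (exp x * cos y - 1 - x)%R with ((exp x - 1 - x) + exp x * (cos y - 1))%R by ring.
  eapply Rle_trans. apply Rabs_triang. apply Rplus_le_compat. apply Rabs_exp_sub1_sub_id_le.
  pose proof (exp_pos x).
  rewrite Rabs_mult, (Rabs_pos_eq (exp x)) by lra. apply Rmult_le_compat_l. lra. apply Rabs_cos_sub1_le_sqr.
Qed.

Lemma Rabs_exp_sin_sub_le x y :
  (Rabs (exp x * sin y - y) <= Rabs x * exp (Rabs x) * Rabs y + Rabs y * Rabs y)%R.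
Proof.
  replace (exp x * sin y - y)%R with ((exp x - 1) * sin y + (sin y - y))%R by ring.
  eapply Rle_trans. apply Rabs_triang. apply Rplus_le_compat. 2: apply Rabs_sin_sub_id_le.
  rewrite Rabs_mult. apply Rmult_le_compat; try apply Rabs_pos. apply Rabs_exp_sub1_le. apply Rabs_sin_le.
Qed.

Lemma Cmod_cexp_sub1_sub_le u : (Cmod (cexp u - 1 - u) <= 4 * Cmod u * Cmod u * exp (Cmod u))%R.
Proof.
  destruct u as [x y].
  pose proof (Rabs_fst_le_Cmod (x,y)) as Hx. pose proof (Rabs_snd_le_Cmod (x,y)) as Hy. simpl in Hx, Hy.
  set (m := Cmod (x,y)) in *.
  assert (E : cexp (x, y) - 1 - (x, y) = ((exp x * cos y - 1 - x)%R, (exp x * sin y - y)%R)).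
  { unfold cexp, Re, Im; simpl. apply C_ext; simpl; ring. }
  rewrite E. eapply Rle_trans. apply Cmod_le_Rabs_sum.
  assert (Hex : (exp x <= exp m)%R) by (apply exp_le_exp_of_le; eapply Rle_trans; [apply Rle_abs | exact Hx]).
  assert (Hex' : (exp (Rabs x) <= exp m)%R) by (apply exp_le_exp_of_le; exact Hx).
  pose proof (exp_pos x). pose proof (exp_pos (Rabs x)). pose proof (Rabs_pos x). pose proof (Rabs_pos y).
  pose proof (Rabs_exp_cos_sub_le x y) as K1. pose proof (Rabs_exp_sin_sub_le x y) as K2.
  assert (Hm : (0 <= m)%R) by lra.
  assert (Hxx : (Rabs x * Rabs x <= m * m)%R) by nra.
  assert (Hyy : (Rabs y * Rabs y <= m * m)%R) by nra.
  assert (Hxy : (Rabs x * Rabs y <= m * m)%R) by nra.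
  pose proof (exp_pos m).
  assert (A1 : (Rabs x * Rabs x * exp (Rabs x) <= m*m*exp m)%R) by (apply Rmult_le_compat; nra).
  assert (A2 : (exp x * (Rabs y * Rabs y) <= m*m*exp m)%R) by (rewrite Rmult_comm; apply Rmult_le_compat; nra).
  assert (A3 : (Rabs x * exp (Rabs x) * Rabs y <= m*m*exp m)%R).
  { replace (Rabs x * exp (Rabs x) * Rabs y)%R with (Rabs x * Rabs y * exp (Rabs x))%R by ring.
    apply Rmult_le_compat; nra. }
  assert (A4 : (Rabs y * Rabs y <= m*m*exp m)%R).
  { assert (1 <= exp m)%R by (rewrite <- exp_0; apply exp_le_exp_of_le; exact Hm). nra. }
  lra.
Qed.

Lemma lim_filtermap_of_Cmod {T} (G : (T -> Prop) -> Prop) {PG : ProperFilter G} (f : T -> C) (l : C) :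
  (forall eps : posreal, G (fun x => Cmod (f x - l) < eps)%R) ->
  @lim C_CompleteNormedModule (filtermap f G) = l.
Proof.
  intros H.
  assert (Hb : forall eps : posreal, filtermap f G (ball l eps)).
  { intros eps. unfold filtermap. apply filter_imp with (2 := H eps).
    intros x Hx. apply (@norm_compat1 C_AbsRing C_NormedModule). exact Hx. }
  assert (Hc : @cauchy C_UniformSpace (filtermap f G)).
  { intros eps. exists l. apply Hb. }
  symmetry. apply (@eq_close C_AbsRing C_NormedModule).
  intros eps.
  pose proof (@complete_cauchy C_CompleteNormedModule (filtermap f G) _ Hc (pos_div_2 eps)) as H1.
  pose proof (Hb (pos_div_2 eps)) as H2.
  unfold filtermap in H1, H2.
  destruct (filter_ex (F:=G) _ (filter_and _ _ H1 H2)) as [t0 [Ht1 Ht2]].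
  set (t := f t0) in *.
  replace (pos eps) with (pos_div_2 eps + pos_div_2 eps)%R by (simpl; lra).
  apply ball_triangle with t. exact Ht2. apply ball_sym. exact Ht1.
Qed.

Definition Clim_seq (u : nat -> C) (l : C) :=
  forall eps : posreal, exists N, forall n, (N <= n)%nat -> (Cmod (u n - l) < eps)%R.

Lemma lim_seq_of_Clim u l : Clim_seq u l -> @lim C_CompleteNormedModule (filtermap u eventually) = l.
Proof.
  intros H. apply (@lim_filtermap_of_Cmod nat eventually _ u l). intros eps. destruct (H eps) as [N HN]. exists N. exact HN.
Qed.

Lemma locally'_C_proper (z : C) : ProperFilter (@locally' C_UniformSpace z).
Proof.
  constructor.
  - intros P [e He]. exists (z + RtoC (e/2)). apply He.
    + apply (@norm_compat1 C_AbsRing C_NormedModule).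
      change (Cmod (z + RtoC (e/2) - z) < e)%R.
      replace (z + RtoC (e/2) - z) with (RtoC (e/2)) by ring.
      rewrite Cmod_R. destruct e as [e ep]; simpl. rewrite Rabs_pos_eq; lra.
    + intros Heq. assert (RtoC (e/2) = 0) as H0.
      { rewrite <- (Cplus_0_r z) in Heq at 2. 
        apply (f_equal (fun w => w - z)) in Heq. 
        replace (z + RtoC (e/2) - z) with (RtoC (e/2)) in Heq by ring.
        rewrite Heq. ring. }
      apply (f_equal fst) in H0. simpl in H0. destruct e; simpl in *; lra.
  - apply locally'_filter.
Qed.

Lemma lim_locally'_0_of_Cmod (f : C -> C) (l : C) :
  (forall eps : posreal, exists del : posreal, forall h : C, h <> 0 -> (Cmod h < del)%R -> (Cmod (f h - l) < eps)%R) ->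
  @lim C_CompleteNormedModule (filtermap f (@locally' C_UniformSpace (RtoC 0))) = l.
Proof.
  intros H. apply (@lim_filtermap_of_Cmod _ _ (locally'_C_proper _)).
  intros eps. destruct (H eps) as [d Hd].
  exists (pos_div_2 d). intros y Hy Hne. apply Hd. exact Hne.
  destruct Hy as [H1 H2].
  change (Rabs (fst y + - 0) < d/2)%R in H1. change (Rabs (snd y + - 0) < d/2)%R in H2.
  rewrite Ropp_0, Rplus_0_r in H1, H2.
  eapply Rle_lt_trans. apply Cmod_2Rmax.
  assert (sqrt 2 < 2)%R.
  { rewrite <- (sqrt_square 2) at 2 by lra. apply sqrt_lt_1; lra. }
  pose proof (sqrt_pos 2). destruct d as [d dp]; simpl in *.
  apply Rmax_case; [pose proof (Rabs_pos (fst y)) | pose proof (Rabs_pos (snd y))]; nra.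
Qed.

Section ComplexLimits.
Implicit Types (u v : nat -> C) (a b c l : C).

Lemma Cmod_sub_sym (x y : C) : Cmod (x - y) = Cmod (y - x).
Proof. replace (x - y) with (- (y - x)) by ring. apply Cmod_opp. Qed.

Lemma Cmod_triangle3 (x y z : C) : (Cmod (x + y + z) <= Cmod x + Cmod y + Cmod z)%R.
Proof. eapply Rle_trans. apply Cmod_triangle. pose proof (Cmod_triangle x y). lra. Qed.

Lemma Cmod_sub_Cmod_le (x y : C) : (Cmod x - Cmod y <= Cmod (x - y))%R.
Proof. pose proof (Cmod_triangle (x - y) y). replace (x - y + y) with x in H by ring. lra. Qed.

Lemma Cmod_minus_triangle (x y : C) : (Cmod (x - y) <= Cmod x + Cmod y)%R.
Proof. unfold Cminus. eapply Rle_trans. apply Cmod_triangle. rewrite Cmod_opp. lra. Qed.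

Lemma Clim_ext u v l : (forall n, u n = v n) -> Clim_seq u l -> Clim_seq v l.
Proof. intros E H eps. destruct (H eps) as [N HN]. exists N. intros n Hn. rewrite <- E. auto. Qed.

Lemma Clim_const c : Clim_seq (fun _ => c) c.
Proof. intros eps. exists O. intros. replace (c - c) with (RtoC 0) by ring. rewrite Cmod_0. apply cond_pos. Qed.

Lemma Clim_of_shift_succ u l : Clim_seq (fun n => u (S n)) l -> Clim_seq u l.
Proof. intros H eps. destruct (H eps) as [N HN]. exists (S N). intros n Hn. destruct n. lia. apply HN. lia. Qed.

Lemma Clim_shift_succ u l : Clim_seq u l -> Clim_seq (fun n => u (S n)) l.
Proof. intros H eps. destruct (H eps) as [N HN]. exists N. intros n Hn. apply HN. lia. Qed.

Lemma Clim_unique u l1 l2 : Clim_seq u l1 -> Clim_seq u l2 -> l1 = l2.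
Proof.
  intros H1 H2. cut (l1 - l2 = 0). { intros Z. replace l1 with (l1 - l2 + l2) by ring. rewrite Z. ring. }
  apply Cmod_eq_0.
  apply Rle_antisym. 2: apply Cmod_ge_0.
  apply Rnot_lt_le. intros Hp.
  destruct (H1 (mkposreal _ (ltac:(lra) : (0 < (Cmod (l1 - l2)) / 2)%R))) as [N1 K1].
  destruct (H2 (mkposreal _ (ltac:(lra) : (0 < (Cmod (l1 - l2)) / 2)%R))) as [N2 K2].
  specialize (K1 (max N1 N2) ltac:(lia)). specialize (K2 (max N1 N2) ltac:(lia)). simpl in *.
  pose proof (Cmod_triangle (u (max N1 N2) - l2) (l1 - u (max N1 N2))).
  replace (u (max N1 N2) - l2 + (l1 - u (max N1 N2))) with (l1 - l2) in H by ring.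
  rewrite Cmod_sub_sym in K1. unfold Rdiv in *. lra.
Qed.

Lemma Clim_plus u v a b : Clim_seq u a -> Clim_seq v b -> Clim_seq (fun n => u n + v n) (a + b).
Proof.
  intros Hu Hv eps. destruct (Hu (pos_div_2 eps)) as [N1 K1]. destruct (Hv (pos_div_2 eps)) as [N2 K2].
  exists (max N1 N2). intros n Hn. specialize (K1 n ltac:(lia)). specialize (K2 n ltac:(lia)).
  replace (u n + v n - (a + b)) with ((u n - a) + (v n - b)) by ring.
  eapply Rle_lt_trans. apply Cmod_triangle. simpl in *. lra.
Qed.

Lemma Clim_opp u a : Clim_seq u a -> Clim_seq (fun n => - u n) (- a).
Proof.
  intros Hu eps. destruct (Hu eps) as [N K]. exists N. intros n Hn.
  replace (- u n - - a) with (- (u n - a)) by ring. rewrite Cmod_opp. auto.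
Qed.

Lemma Clim_minus u v a b : Clim_seq u a -> Clim_seq v b -> Clim_seq (fun n => u n - v n) (a - b).
Proof. intros. apply Clim_plus; auto. apply Clim_opp; auto. Qed.

Lemma Clim_bounded u a : Clim_seq u a -> exists M, (0 < M)%R /\ forall n, (Cmod (u n) <= M)%R.
Proof.
  intros H. destruct (H (mkposreal 1 Rlt_0_1)) as [N K].
  assert (exists M0, (0 < M0)%R /\ forall n, (n < N)%nat -> (Cmod (u n) <= M0)%R) as [M0 [HM0 KM0]].
  { clear K. induction N.
    - exists 1%R. split. lra. intros; lia.
    - destruct IHN as [M0 [HM0 KM0]]. exists (Rmax M0 (Cmod (u N))). split.
      eapply Rlt_le_trans. exact HM0. apply Rmax_l.
      intros n Hn. destruct (Nat.eq_dec n N). subst. apply Rmax_r.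
      eapply Rle_trans. apply KM0. lia. apply Rmax_l. }
  exists (Rmax M0 (Cmod a + 1)). split. eapply Rlt_le_trans. exact HM0. apply Rmax_l.
  intros n. destruct (Compare_dec.le_lt_dec N n).
  - specialize (K n l). simpl in K. eapply Rle_trans. 2: apply Rmax_r.
    pose proof (Cmod_triangle (u n - a) a). replace (u n - a + a) with (u n) in H0 by ring. lra.
  - eapply Rle_trans. apply KM0; auto. apply Rmax_l.
Qed.

Lemma Clim_mult u v a b : Clim_seq u a -> Clim_seq v b -> Clim_seq (fun n => u n * v n) (a * b).
Proof.
  intros Hu Hv. destruct (Clim_bounded v b Hv) as [M [HM KM]].
  intros eps.
  set (e1 := (eps / (2 * M))%R). set (e2 := (eps / (2 * (Cmod a + 1)))%R).
  assert (He1 : (0 < e1)%R). { unfold e1. apply Rdiv_lt_0_compat. apply cond_pos. lra. }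
  assert (He2 : (0 < e2)%R). { unfold e2. apply Rdiv_lt_0_compat. apply cond_pos. pose proof (Cmod_ge_0 a). lra. }
  destruct (Hu (mkposreal _ He1)) as [N1 K1]. destruct (Hv (mkposreal _ He2)) as [N2 K2].
  exists (max N1 N2). intros n Hn. specialize (K1 n ltac:(lia)). specialize (K2 n ltac:(lia)). simpl in *.
  replace (u n * v n - a * b) with ((u n - a) * v n + a * (v n - b)) by ring.
  eapply Rle_lt_trans. apply Cmod_triangle. rewrite !Cmod_mult.
  pose proof (Cmod_ge_0 a). pose proof (Cmod_ge_0 (u n - a)). pose proof (Cmod_ge_0 (v n - b)).
  pose proof (KM n).
  assert (P1 : (Cmod (u n - a) * Cmod (v n) <= e1 * M)%R). { apply Rmult_le_compat; try lra. apply Cmod_ge_0. }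
  assert (P2 : (Cmod a * Cmod (v n - b) <= (Cmod a + 1) * e2)%R). { apply Rmult_le_compat; try lra. }
  assert (P3 : (Cmod a * Cmod (v n - b) < (Cmod a + 1) * e2)%R).
  { destruct (Req_dec (Cmod a) 0) as [Z|Z]. rewrite Z. nra. apply Rlt_le_trans with (Cmod a * e2)%R. apply Rmult_lt_compat_l; lra. nra. }
  assert (e1 * M = eps / 2)%R. { unfold e1. field. lra. }
  assert ((Cmod a + 1) * e2 = eps / 2)%R. { unfold e2. field. lra. }
  lra.
Qed.

Lemma Clim_scal c u a : Clim_seq u a -> Clim_seq (fun n => c * u n) (c * a).
Proof. intros. apply Clim_mult; auto. apply Clim_const. Qed.

Lemma Clim_inv u a : a <> 0 -> Clim_seq u a -> Clim_seq (fun n => / u n) (/ a).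
Proof.
  intros Ha Hu.
  assert (Hpa : (0 < Cmod a)%R). { pose proof (Cmod_ge_0 a) as G0. destruct (Req_dec (Cmod a) 0) as [G1|G1]. apply Cmod_eq_0 in G1. contradiction. lra. }
  destruct (Hu (mkposreal _ (ltac:(lra) : (0 < Cmod a / 2)%R))) as [N0 K0]. simpl in K0.
  assert (Hlow : forall n, (N0 <= n)%nat -> (Cmod a / 2 <= Cmod (u n))%R).
  { intros n Hn. specialize (K0 n Hn). pose proof (Cmod_sub_Cmod_le a (a - u n)). replace (a - (a - u n)) with (u n) in H by ring.
    rewrite Cmod_sub_sym in K0. lra. }
  intros eps.
  set (e := (eps * (Cmod a * Cmod a / 2))%R).
  assert (He : (0 < e)%R). { unfold e. apply Rmult_lt_0_compat. apply cond_pos. nra. }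
  destruct (Hu (mkposreal _ He)) as [N1 K1].
  exists (max N0 N1). intros n Hn. specialize (K1 n ltac:(lia)). specialize (Hlow n ltac:(lia)). simpl in K1.
  assert (Hun : u n <> 0). { intros Z. rewrite Z, Cmod_0 in Hlow. lra. }
  replace (/ u n - / a) with ((a - u n) / (u n * a)) by (field; auto).
  rewrite Cmod_div, Cmod_mult by (apply Cmult_neq_0; auto).
  rewrite Cmod_sub_sym.
  apply Rlt_le_trans with (e / (Cmod a / 2 * Cmod a))%R.
  - unfold Rdiv. apply Rle_lt_trans with (Cmod (u n - a) * / (Cmod a / 2 * Cmod a))%R.
    + apply Rmult_le_compat_l. apply Cmod_ge_0. apply Rinv_le_contravar. nra. apply Rmult_le_compat_r; lra.
    + apply Rmult_lt_compat_r. apply Rinv_0_lt_compat. nra. exact K1.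
  - unfold e. right. field. lra.
Qed.

Lemma Clim_div u v a b : b <> 0 -> Clim_seq u a -> Clim_seq v b -> Clim_seq (fun n => u n / v n) (a / b).
Proof. intros. apply Clim_mult; auto. apply Clim_inv; auto. Qed.

Lemma Clim_le u a (v : C) (M : R) : Clim_seq u a -> (exists N, forall n, (N <= n)%nat -> (Cmod (u n - v) <= M)%R) -> (Cmod (a - v) <= M)%R.
Proof.
  intros H [N0 K]. apply Rnot_lt_le. intros Hlt.
  assert (Hp : (0 < Cmod (a - v) - M)%R) by lra.
  destruct (H (mkposreal _ Hp)) as [N1 K1]. specialize (K1 (max N0 N1) ltac:(lia)). specialize (K (max N0 N1) ltac:(lia)).
  simpl in K1. pose proof (Cmod_triangle (a - u (max N0 N1)) (u (max N0 N1) - v)).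
  replace (a - u (max N0 N1) + (u (max N0 N1) - v)) with (a - v) in H0 by ring.
  rewrite Cmod_sub_sym in K1. lra.
Qed.

Lemma ball_of_Cmod (x y : C) (eps : R) : (Cmod (y - x) < eps)%R -> @ball C_UniformSpace x eps y.
Proof. intros H. apply (@norm_compat1 C_AbsRing C_NormedModule). exact H. Qed.

Lemma Cmod_of_ball (x y : C) (eps : R) : @ball C_UniformSpace x (eps/2) y -> (Cmod (y - x) < eps)%R.
Proof.
  intros [H1 H2].
  change (Rabs (fst y + - fst x) < eps/2)%R in H1. change (Rabs (snd y + - snd x) < eps/2)%R in H2.
  eapply Rle_lt_trans. apply Cmod_2Rmax.
  assert (sqrt 2 < 2)%R.
  { rewrite <- (sqrt_square 2) at 2 by lra. apply sqrt_lt_1; lra. }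
  pose proof (sqrt_pos 2). simpl.
  apply Rmax_case; [pose proof (Rabs_pos (fst y + - fst x)) | pose proof (Rabs_pos (snd y + - snd x))]; nra.
Qed.

Lemma Clim_seq_of_Cauchy (u : nat -> C) :
  (forall eps : posreal, exists N, forall m n, (N <= m)%nat -> (N <= n)%nat -> (Cmod (u m - u n) < eps)%R) ->
  exists l, Clim_seq u l.
Proof.
  intros H.
  destruct (proj1 (@filterlim_locally_cauchy nat C_CompleteNormedModule eventually _ u)) as [l Hl].
  - intros eps. destruct (H eps) as [N K]. exists (fun n => (N <= n)%nat). split. exists N; auto.
    intros m n Hm Hn. apply ball_of_Cmod. apply K; auto.
  - exists l. intros eps. 
    destruct (proj1 (@filterlim_locally nat C_UniformSpace eventually _ u l) Hl (pos_div_2 eps)) as [N K].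
    exists N. intros n Hn. apply Cmod_of_ball. apply K. auto.
Qed.

End ComplexLimits.

(** * Finite sums and products; absolutely convergent products *)

Fixpoint cprod (f : nat -> C) (n : nat) : C := match n with O => 1 | S m => cprod f m * f m end.
Fixpoint csum (f : nat -> C) (n : nat) : C := match n with O => 0 | S m => csum f m + f m end.
Fixpoint rsum (f : nat -> R) (n : nat) : R := match n with O => 0%R | S m => (rsum f m + f m)%R end.

Lemma csum_ext f g n : (forall k, (k < n)%nat -> f k = g k) -> csum f n = csum g n.
Proof. induction n; simpl; intros H; auto. rewrite IHn, H; auto. Qed.
Lemma cprod_ext f g n : (forall k, (k < n)%nat -> f k = g k) -> cprod f n = cprod g n.
Proof. induction n; simpl; intros H; auto. rewrite IHn, H; auto. Qed.
Lemma rsum_le f g n : (forall k, (k < n)%nat -> (f k <= g k)%R) -> (rsum f n <= rsum g n)%R.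
Proof. induction n; simpl; intros H. lra. pose proof (H n ltac:(lia)). pose proof (IHn ltac:(auto)). lra. Qed.
Lemma rsum_nonneg f n : (forall k, (0 <= f k)%R) -> (0 <= rsum f n)%R.
Proof. intros H; induction n; simpl. lra. pose proof (H n). lra. Qed.

Lemma cprod_split f m n : cprod f (m + n) = cprod f m * cprod (fun j => f (m + j)%nat) n.
Proof. induction n; simpl. rewrite Nat.add_0_r. ring. rewrite Nat.add_succ_r. simpl. rewrite IHn. ring. Qed.
Lemma csum_split f m n : csum f (m + n) = csum f m + csum (fun j => f (m + j)%nat) n.
Proof. induction n; simpl. rewrite Nat.add_0_r. ring. rewrite Nat.add_succ_r. simpl. rewrite IHn. ring. Qed.
Lemma rsum_split f m n : rsum f (m + n) = (rsum f m + rsum (fun j => f (m + j)%nat) n)%R.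
Proof. induction n; simpl. rewrite Nat.add_0_r. ring. rewrite Nat.add_succ_r. simpl. rewrite IHn. ring. Qed.

Lemma csum_scal c f n : csum (fun k => c * f k) n = c * csum f n.
Proof. induction n; simpl. ring. rewrite IHn. ring. Qed.
Lemma csum_minus f g n : csum (fun k => f k - g k) n = csum f n - csum g n.
Proof. induction n; simpl. ring. rewrite IHn. ring. Qed.
Lemma cprod_mult f g n : cprod (fun k => f k * g k) n = cprod f n * cprod g n.
Proof. induction n; simpl. ring. rewrite IHn. ring. Qed.
Lemma csum_tele f n : csum (fun k => f k - f (S k)) n = f O - f n.
Proof. induction n; simpl. ring. rewrite IHn. ring. Qed.

Lemma Cmod_csum f n : (Cmod (csum f n) <= rsum (fun k => Cmod (f k)) n)%R.
Proof. induction n; simpl. rewrite Cmod_0. lra. eapply Rle_trans. apply Cmod_triangle. lra. Qed.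

Lemma Cmod_cprod_sub1_sub_csum_le (w : nat -> C) n :
  (Cmod (cprod (fun k => 1 + w k) n - 1 - csum w n)%C <=
   exp (rsum (fun k => Cmod (w k)) n) - 1 - rsum (fun k => Cmod (w k)) n)%R.
Proof.
  induction n; simpl.
  - replace (1 - 1 - 0) with (RtoC 0) by ring. rewrite Cmod_0, exp_0. lra.
  - set (P := cprod (fun k => 1 + w k) n) in *. set (S := csum w n) in *.
    set (s := rsum (fun k => Cmod (w k)) n) in *.
    replace (P * (1 + w n) - 1 - (S + w n)) with ((P - 1 - S) + w n * (P - 1)) by ring.
    eapply Rle_trans. apply Cmod_triangle. rewrite Cmod_mult.
    assert (HP1 : (Cmod (P - 1) <= exp s - 1)%R).
    { replace (P - 1) with ((P - 1 - S) + S) by ring. eapply Rle_trans. apply Cmod_triangle.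
      pose proof (Cmod_csum w n). fold S s in H. lra. }
    rewrite exp_plus. pose proof (exp_ineq1_le (Cmod (w n))). pose proof (exp_pos s).
    pose proof (Cmod_ge_0 (w n)).
    assert (Cmod (w n) * Cmod (P - 1) <= Cmod (w n) * (exp s - 1))%R by (apply Rmult_le_compat_l; lra).
    nra.
Qed.

Lemma Cmod_cprod_sub1_le (w : nat -> C) n :
  (Cmod (cprod (fun k => 1 + w k) n - 1)%C <= exp (rsum (fun k => Cmod (w k)) n) - 1)%R.
Proof.
  pose proof (Cmod_cprod_sub1_sub_csum_le w n). pose proof (Cmod_csum w n).
  replace (cprod (fun k => 1 + w k) n - 1) with ((cprod (fun k => 1 + w k) n - 1 - csum w n) + csum w n) by ring.
  eapply Rle_trans. apply Cmod_triangle. lra.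
Qed.

Lemma Cmod_cprod_le (w : nat -> C) n :
  (Cmod (cprod (fun k => 1 + w k) n)%C <= exp (rsum (fun k => Cmod (w k)) n))%R.
Proof.
  pose proof (Cmod_cprod_sub1_le w n).
  replace (cprod (fun k => 1 + w k) n) with ((cprod (fun k => 1 + w k) n - 1) + 1) by ring.
  eapply Rle_trans. apply Cmod_triangle. rewrite Cmod_1. lra.
Qed.

Definition tele_weight (j : nat) : R := (1 / ((INR j + 1) * (INR j + 2)))%R.

Lemma tele_weight_pos j : (0 < tele_weight j)%R.
Proof. unfold tele_weight. pose proof (pos_INR j). apply Rdiv_lt_0_compat. lra. nra. Qed.

Lemma rsum_tele_weight m n : rsum (fun j => tele_weight (m + j)) n = (1 / (INR m + 1) - 1 / (INR (m + n) + 1))%R.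
Proof.
  induction n; simpl.
  - rewrite Nat.add_0_r. ring.
  - rewrite IHn. unfold tele_weight. rewrite Nat.add_succ_r, S_INR. pose proof (pos_INR (m + n)). pose proof (pos_INR m).
    field. repeat split; lra.
Qed.

Lemma rsum_tele_weight_le m n : (rsum (fun j => tele_weight (m + j)) n <= 1 / (INR m + 1))%R.
Proof.
  rewrite rsum_tele_weight. pose proof (pos_INR (m+n)). assert (0 < 1 / (INR (m+n) + 1))%R by (apply Rdiv_lt_0_compat; lra). lra.
Qed.

Definition dominated (w : nat -> C) (D : R) := forall j, (Cmod (w j) <= D * tele_weight j)%R.

Lemma dominated_tail_sum_le w D m n : dominated w D -> (rsum (fun j => Cmod (w (m + j)%nat)) n <= D / (INR m + 1))%R.
Proof.
  intros H. eapply Rle_trans. apply rsum_le with (g := fun j => (D * tele_weight (m + j))%R). intros; apply H.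
  assert (E : forall n, rsum (fun j => D * tele_weight (m + j))%R n = (D * rsum (fun j => tele_weight (m+j)) n)%R).
  { induction n0; simpl. ring. rewrite IHn0. ring. }
  rewrite E. assert (0 <= D)%R. { pose proof (H O). pose proof (Cmod_ge_0 (w O)). pose proof (tele_weight_pos O). nra. }
  unfold Rdiv. rewrite <- (Rmult_1_l (/ (INR m + 1))). replace (1 * / (INR m + 1))%R with (1 / (INR m + 1))%R by (unfold Rdiv; ring).
  apply Rmult_le_compat_l; auto. apply rsum_tele_weight_le.
Qed.

Lemma dominated_sum_le w D n : dominated w D -> (rsum (fun j => Cmod (w j)) n <= D)%R.
Proof.
  intros H. pose proof (dominated_tail_sum_le w D 0 n H). simpl in H0.
  replace (D / (0 + 1))%R with D in H0 by field. exact H0.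
Qed.

Lemma dominated_nonneg w D : dominated w D -> (0 <= D)%R.
Proof. intros H. pose proof (H O). pose proof (Cmod_ge_0 (w O)). pose proof (tele_weight_pos O). nra. Qed.

Lemma div_succ_eventually_lt D (eps : posreal) : (0 <= D)%R -> exists N, forall m, (N <= m)%nat -> (D / (INR m + 1) < eps)%R.
Proof.
  intros HD. destruct eps as [e ep]; simpl.
  assert (Hq : (0 <= D / e)%R) by (apply Rmult_le_pos; auto; left; apply Rinv_0_lt_compat; auto).
  destruct (archimed (D / e)) as [H1 _].
  assert (Hu : (0 <= up (D / e))%Z). { apply le_IZR. lra. }
  exists (Z.to_nat (up (D / e))). intros m Hm.
  apply le_INR in Hm. rewrite INR_IZR_INZ, Z2Nat.id in Hm by lia.
  pose proof (pos_INR m).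
  apply (Rmult_lt_reg_r (INR m + 1)). lra. unfold Rdiv. rewrite Rmult_assoc, Rinv_l, Rmult_1_r by lra.
  assert (D / e < INR m + 1)%R by lra.
  apply (Rmult_lt_compat_l e) in H0; auto. unfold Rdiv in H0.
  rewrite <- Rmult_assoc, (Rmult_comm e D), Rmult_assoc, Rinv_r, Rmult_1_r in H0 by lra. lra.
Qed.

Lemma cprod_1plus_converges w D : dominated w D -> exists P, Clim_seq (cprod (fun k => 1 + w k)) P.
Proof.
  intros H. apply Clim_seq_of_Cauchy. intros eps. pose proof (dominated_nonneg w D H) as HD.
  set (e' := (eps / (exp D * exp 1 + 1))%R).
  assert (He' : (0 < e')%R). { unfold e'. apply Rdiv_lt_0_compat. apply cond_pos. pose proof (exp_pos D). pose proof (exp_pos 1). nra. }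
  destruct (div_succ_eventually_lt D (mkposreal _ (Rmin_pos _ _ He' Rlt_0_1)) HD) as [N K].
  assert (Main : forall m n, (N <= m)%nat -> (Cmod (cprod (fun k => 1 + w k) (m + n) - cprod (fun k => 1 + w k) m)%C < eps)%R).
  { intros m n Hm. rewrite cprod_split.
    replace (cprod (fun k => 1 + w k) m * cprod (fun j => 1 + w (m + j)%nat) n - cprod (fun k => 1 + w k) m)
      with (cprod (fun k => 1 + w k) m * (cprod (fun j => 1 + w (m + j)%nat) n - 1)) by ring.
    rewrite Cmod_mult.
    pose proof (Cmod_cprod_le w m) as B1. pose proof (dominated_sum_le w D m H) as B2.
    pose proof (Cmod_cprod_sub1_le (fun j => w (m + j)%nat) n) as B3. pose proof (dominated_tail_sum_le w D m n H) as B4.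
    specialize (K m Hm). simpl in K.
    set (t := rsum (fun k => Cmod (w (m + k)%nat)) n) in *.
    assert (Ht0 : (0 <= t)%R). { apply rsum_nonneg. intros; apply Cmod_ge_0. }
    assert (Ht1 : (t <= 1)%R). { pose proof (Rmin_r e' 1). lra. }
    assert (Ht2 : (t <= e')%R). { pose proof (Rmin_l e' 1). lra. }
    assert (E1 : (exp (rsum (fun k => Cmod (w k)) m) <= exp D)%R).
    { apply exp_le_exp_of_le; exact B2. }
    assert (E2 : (exp t - 1 <= t * exp 1)%R).
    { eapply Rle_trans. apply exp_sub1_le; auto. apply Rmult_le_compat_l; auto.
      apply exp_le_exp_of_le; exact Ht1. }
    pose proof (Cmod_ge_0 (cprod (fun k => 1 + w k) m)). pose proof (Cmod_ge_0 (cprod (fun j => 1 + w (m + j)%nat) n - 1)).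
    pose proof (exp_pos D). pose proof (exp_pos 1).
    apply Rle_lt_trans with (exp D * (e' * exp 1))%R.
    apply Rmult_le_compat; try lra. apply Rle_trans with (t * exp 1)%R; try lra. apply Rmult_le_compat_r; lra.
    unfold e'. destruct eps as [e ep]; simpl.
    apply Rlt_le_trans with (e / (exp D * exp 1 + 1) * (exp D * exp 1 + 1))%R.
    2: right; field; nra.
    rewrite <- Rmult_assoc, (Rmult_comm (exp D)), Rmult_assoc.
    apply Rmult_lt_compat_l. apply Rdiv_lt_0_compat; nra. nra. }
  exists N. intros m n Hm Hn.
  destruct (Compare_dec.le_lt_dec m n).
  - replace n with (m + (n - m))%nat by lia. rewrite Cmod_sub_sym. apply Main; auto.
  - replace m with (n + (m - n))%nat by lia. apply Main; auto.
Qed.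

Lemma csum_converges w D : dominated w D -> exists S, Clim_seq (csum w) S.
Proof.
  intros H. apply Clim_seq_of_Cauchy. intros eps. pose proof (dominated_nonneg w D H) as HD.
  destruct (div_succ_eventually_lt D eps HD) as [N K].
  assert (Main : forall m n, (N <= m)%nat -> (Cmod (csum w (m + n) - csum w m)%C < eps)%R).
  { intros m n Hm. rewrite csum_split. replace (csum w m + csum (fun j => w (m + j)%nat) n - csum w m) with (csum (fun j => w (m + j)%nat) n) by ring.
    eapply Rle_lt_trans. apply Cmod_csum. eapply Rle_lt_trans. apply dominated_tail_sum_le; eauto. apply K; auto. }
  exists N. intros m n Hm Hn.
  destruct (Compare_dec.le_lt_dec m n).
  - replace n with (m + (n - m))%nat by lia. rewrite Cmod_sub_sym. apply Main; auto.
  - replace m with (n + (m - n))%nat by lia. apply Main; auto.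
Qed.

Lemma Cmod_cprod_sub1_sub_csum_dominated (V t : nat -> C) (D E : R) n :
  dominated V D -> dominated (fun j => V j - t j) E ->
  (Cmod (cprod (fun j => 1 + V j) n - 1 - csum t n)%C <= D * D * exp D + E)%R.
Proof.
  intros HV Ht. pose proof (Cmod_cprod_sub1_sub_csum_le V n) as P.
  set (s := rsum (fun k => Cmod (V k)) n) in *.
  assert (Hs0 : (0 <= s)%R) by (apply rsum_nonneg; intros; apply Cmod_ge_0).
  assert (HsD : (s <= D)%R) by (apply dominated_sum_le; exact HV).
  pose proof (exp_sub1_sub_id_le s Hs0).
  assert (exp s <= exp D)%R by (apply exp_le_exp_of_le; exact HsD).
  assert (s * s * exp s <= D * D * exp D)%R by (pose proof (exp_pos s); apply Rmult_le_compat; nra).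
  replace (cprod (fun j => 1 + V j) n - 1 - csum t n)
    with ((cprod (fun j => 1 + V j) n - 1 - csum V n) + csum (fun j => V j - t j) n) by (rewrite csum_minus; ring).
  eapply Rle_trans. apply Cmod_triangle.
  assert (Cmod (csum (fun j => V j - t j) n)%C <= E)%R.
  { eapply Rle_trans. apply Cmod_csum. apply dominated_sum_le. exact Ht. }
  lra.
Qed.

(** * Gauss' product for Gamma *)

Lemma neq0_of_Cmod_ge (y : C) (a : R) : (0 < a)%R -> (a <= Cmod y)%R -> y <> 0.
Proof. intros H1 H2 E. rewrite E, Cmod_0 in H2. lra. Qed.

Lemma Rinv_le_1 (k : R) : (1 <= k)%R -> (/ k <= 1)%R.
Proof. intros H. assert (0 < / k)%R by (apply Rinv_0_lt_compat; lra). assert (k * / k = 1)%R by (field; lra). nra. Qed.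

Definition quad_const (c H : R) : R := (4 * exp H + 1 / (c * c) + (1 + 4 * H * exp H) / c)%R.

Lemma quad_const_nonneg c H : (0 < c)%R -> (0 <= H)%R -> (0 <= quad_const c H)%R.
Proof.
  intros Hc HH. unfold quad_const. pose proof (exp_pos H).
  assert (0 <= 1 / (c * c))%R by (apply Rdiv_le_0_compat; nra).
  assert (0 <= (1 + 4 * H * exp H) / c)%R by (apply Rdiv_le_0_compat; nra). lra.
Qed.

Lemma Cmod_cexp_sub1_sub_scaled_le (h : C) (l k H : R) :
  (1 <= k)%R -> (0 <= l)%R -> (l <= 1 / k)%R -> (Cmod h <= H)%R ->
  (Cmod (cexp (h * RtoC l) - 1 - h * RtoC l) <= 4 * exp H * (Cmod h * Cmod h) / (k * k))%R.
Proof.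
  intros Hk Hl0 Hl1 HH. set (hm := Cmod h) in *.
  assert (Hhm : (0 <= hm)%R) by apply Cmod_ge_0.
  assert (Hu : Cmod (h * RtoC l) = (hm * l)%R) by (rewrite Cmod_mult, Cmod_R, Rabs_pos_eq; auto).
  assert (Hlk : (l * k <= 1)%R).
  { apply Rmult_le_reg_r with (/ k)%R. apply Rinv_0_lt_compat; lra.
    rewrite Rmult_assoc, Rinv_r, Rmult_1_r, Rmult_1_l by lra. unfold Rdiv in Hl1. lra. }
  assert (Hl1' : (l <= 1)%R) by (apply Rle_trans with (1 / k)%R; auto; unfold Rdiv; rewrite Rmult_1_l; apply Rinv_le_1; lra).
  assert (HeH : (exp (hm * l) <= exp H)%R) by (apply exp_le_exp_of_le; nra).
  eapply Rle_trans. apply Cmod_cexp_sub1_sub_le. rewrite Hu.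
  assert (hm * l * (hm * l) * (k * k) <= hm * hm)%R.
  { replace (hm * l * (hm * l) * (k * k))%R with ((hm * hm) * ((l * k) * (l * k)))%R by ring.
    rewrite <- (Rmult_1_r (hm * hm)) at 2. apply Rmult_le_compat_l. nra.
    assert (0 <= l * k)%R by nra. nra. }
  pose proof (exp_pos H). pose proof (exp_pos (hm * l)).
  apply Rmult_le_reg_r with (k * k)%R. nra. unfold Rdiv.
  replace (4 * exp H * (hm * hm) * / (k * k) * (k * k))%R with (4 * exp H * (hm * hm))%R by (field; nra).
  replace (4 * (hm * l) * (hm * l) * exp (hm * l) * (k * k))%R
    with (4 * exp (hm * l) * (hm * l * (hm * l) * (k * k)))%R by ring.
  assert (0 <= hm * l)%R by nra.
  apply Rmult_le_compat; nra.
Qed.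

Lemma Cmod_cexp_mul_ratio_sub_linear_le (y h : C) (l k c H : R) :
  (1 <= k)%R -> (0 < c)%R -> (0 <= l)%R -> (l <= 1 / k)%R ->
  (c * k <= Cmod y)%R -> (c * k <= Cmod (y + h))%R -> (Cmod h <= H)%R ->
  (Cmod (cexp (h * RtoC l) * (y / (y + h)) - 1 - h * (RtoC l - / y)) <= quad_const c H * (Cmod h * Cmod h) / (k * k))%R.
Proof.
  intros Hk Hc Hl0 Hl1 Hy Hyh HH.
  assert (Hck : (0 < c * k)%R) by nra.
  assert (Hy0 : y <> 0) by (eapply neq0_of_Cmod_ge; eauto).
  assert (Hyh0 : y + h <> 0) by (eapply neq0_of_Cmod_ge; eauto).
  set (u := h * RtoC l). set (r := cexp u - 1 - u).
  assert (Eid : cexp u * (y / (y + h)) - 1 - h * (RtoC l - / y)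
               = r + h * h / (y * (y + h)) + (u + r) * (- h / (y + h))).
  { replace (cexp u) with (1 + u + r) by (unfold r; ring). unfold u. field. split; auto. }
  rewrite Eid.
  set (hm := Cmod h) in *. set (ym := Cmod y) in *. set (zm := Cmod (y + h)) in *.
  assert (Hhm : (0 <= hm)%R) by apply Cmod_ge_0.
  assert (Hu : Cmod u = (hm * l)%R). { unfold u. rewrite Cmod_mult, Cmod_R, Rabs_pos_eq; auto. }
  assert (Hr : (Cmod r <= 4 * exp H * (hm * hm) / (k * k))%R) by (apply Cmod_cexp_sub1_sub_scaled_le; auto).
  assert (T2 : (Cmod (h * h / (y * (y + h))) <= 1 / (c * c) * (hm * hm) / (k * k))%R).
  { rewrite Cmod_div by (apply Cmult_neq_0; auto). rewrite !Cmod_mult. fold hm ym zm.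
    assert (c * k * (c * k) <= ym * zm)%R by (apply Rmult_le_compat; lra).
    unfold Rdiv. rewrite Rmult_1_l. 
    replace (/ (c * c) * (hm * hm) * / (k * k))%R with (hm * hm * / (c * k * (c * k)))%R by (field; lra).
    apply Rmult_le_compat_l. nra. apply Rinv_le_contravar; nra. }
  assert (T3 : (Cmod ((u + r) * (- h / (y + h))) <= (1 + 4 * H * exp H) / c * (hm * hm) / (k * k))%R).
  { rewrite Cmod_mult, Cmod_div, Cmod_opp by auto. fold hm zm.
    assert (Hur : (Cmod (u + r) <= hm / k * (1 + 4 * H * exp H))%R).
    { eapply Rle_trans. apply Cmod_triangle. rewrite Hu.
      assert (hm * l <= hm / k)%R. { unfold Rdiv. apply Rmult_le_compat_l; auto. unfold Rdiv in Hl1; lra. }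
      assert (Hhk : (hm / k <= H)%R). { unfold Rdiv. apply Rle_trans with (hm * 1)%R. apply Rmult_le_compat_l; auto.
         apply Rinv_le_1; lra. lra. }
      assert (4 * exp H * (hm * hm) / (k * k) <= hm / k * (4 * H * exp H))%R.
      { replace (4 * exp H * (hm * hm) / (k * k))%R with (hm / k * (4 * exp H * (hm / k)))%R by (field; lra).
        apply Rmult_le_compat_l. unfold Rdiv; apply Rmult_le_pos; auto; left; apply Rinv_0_lt_compat; lra.
        pose proof (exp_pos H). nra. }
      lra. }
    assert (Hq : (hm / zm <= hm / (c * k))%R). { unfold Rdiv. apply Rmult_le_compat_l; auto. apply Rinv_le_contravar; lra. }
    apply Rle_trans with (hm / k * (1 + 4 * H * exp H) * (hm / (c * k)))%R.
    apply Rmult_le_compat; auto. apply Cmod_ge_0. unfold Rdiv; apply Rmult_le_pos; auto. left; apply Rinv_0_lt_compat; lra.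
    right. field. lra. }
  eapply Rle_trans. apply Cmod_triangle3. unfold quad_const.
  replace ((4 * exp H + 1 / (c * c) + (1 + 4 * H * exp H) / c) * (hm * hm) / (k * k))%R with
    (4 * exp H * (hm * hm) / (k * k) + 1 / (c * c) * (hm * hm) / (k * k) + (1 + 4 * H * exp H) / c * (hm * hm) / (k * k))%R by (field; lra).
  lra.
Qed.

Definition succR (j : nat) : R := INR (S j).
Definition log_step (j : nat) : R := (ln (INR (S (S j))) - ln (INR (S j)))%R.

Lemma succR_ge1 j : (1 <= succR j)%R.
Proof. unfold succR. rewrite S_INR. pose proof (pos_INR j). lra. Qed.

Lemma ln_le_sub1 t : (0 < t)%R -> (ln t <= t - 1)%R.
Proof. intros H. pose proof (exp_ineq1_le (ln t)). rewrite exp_ln in H0; lra. Qed.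

Lemma log_step_bounds j : (1 / (succR j + 1) <= log_step j)%R /\ (log_step j <= 1 / succR j)%R.
Proof.
  pose proof (succR_ge1 j) as Hk. unfold log_step. replace (INR (S (S j))) with (succR j + 1)%R by (unfold succR; rewrite (S_INR (S j)); ring).
  fold (succR j). set (k := succR j) in *. split.
  - pose proof (ln_le_sub1 (k / (k + 1))) as H. rewrite ln_div in H by lra.
    assert (k / (k+1) - 1 = - (1 / (k + 1)))%R by (field; lra). 
    assert (0 < k / (k + 1))%R by (apply Rdiv_lt_0_compat; lra). lra.
  - pose proof (ln_le_sub1 ((k + 1) / k)) as H. rewrite ln_div in H by lra.
    assert ((k+1) / k - 1 = 1 / k)%R by (field; lra).
    assert (0 < (k + 1) / k)%R by (apply Rdiv_lt_0_compat; lra). lra.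
Qed.

Lemma log_step_nonneg j : (0 <= log_step j)%R.
Proof. pose proof (log_step_bounds j) as [H _]. pose proof (succR_ge1 j). assert (0 < 1 / (succR j + 1))%R by (apply Rdiv_lt_0_compat; lra). lra. Qed.

Lemma log_step_sub_inv_le j : (Cmod (RtoC (log_step j) - / RtoC (succR j)) <= 1 / (succR j * succR j))%R.
Proof.
  pose proof (log_step_bounds j) as [H1 H2]. pose proof (succR_ge1 j) as Hk.
  rewrite <- RtoC_inv by lra. rewrite <- RtoC_minus, Cmod_R.
  rewrite Rabs_left1. 2: { unfold Rdiv in H2. lra. }
  assert (1 / succR j - 1 / (succR j + 1) <= 1 / (succR j * succR j))%R.
  { replace (1 / succR j - 1 / (succR j + 1))%R with (1 / (succR j * (succR j + 1)))%R by (field; lra).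
    unfold Rdiv. rewrite !Rmult_1_l. apply Rinv_le_contravar; nra. }
  unfold Rdiv in *. lra.
Qed.

Lemma inv_sqr_le_tele_weight j : (1 / (succR j * succR j) <= 2 * tele_weight j)%R.
Proof.
  unfold tele_weight, succR. rewrite S_INR. pose proof (pos_INR j).
  replace (2 * (1 / ((INR j + 1) * (INR j + 2))))%R with (1 / ((INR j + 1) * (INR j + 2) / 2))%R by (field; lra).
  unfold Rdiv. rewrite !Rmult_1_l. apply Rinv_le_contravar; nra.
Qed.

Lemma natC_S m : natC (S m) = natC m + 1.
Proof. unfold natC. rewrite S_INR, RtoC_plus. reflexivity. Qed.

Lemma nonpole_add_natC w m : ~ nonpos_int w -> w + natC m <> 0.
Proof. intros H E. apply H. exists m. replace w with (w + natC m - natC m) by ring. rewrite E. ring. Qed.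

Lemma finite_min_pos (f : nat -> R) M : (forall m, (0 < f m)%R) -> exists c0, (0 < c0)%R /\ forall m, (m <= M)%nat -> (c0 <= f m)%R.
Proof.
  intros H. induction M.
  - exists (f O). split; auto. intros m Hm. replace m with O by lia. lra.
  - destruct IHM as [c0 [H0 H1]]. exists (Rmin c0 (f (S M))). split. apply Rmin_pos; auto.
    intros m Hm. destruct (Nat.eq_dec m (S M)). subst. apply Rmin_r.
    eapply Rle_trans. apply Rmin_l. apply H1. lia.
Qed.

Lemma Cmod_add_ge (a b : C) : (Cmod b - Cmod a <= Cmod (a + b))%R.
Proof. pose proof (Cmod_triangle (a + b) (- a)). rewrite Cmod_opp in H. replace (a + b + - a) with b in H by ring. lra. Qed.

Lemma pole_separation w : ~ nonpos_int w -> exists c, (0 < c <= 1)%R /\ (c <= Cmod w)%R /\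
  forall j, (c * succR j <= Cmod (w + RtoC (succR j)))%R.
Proof.
  intros Hw.
  set (M := Z.to_nat (up (2 * Cmod w))).
  assert (HM : (2 * Cmod w <= INR M)%R).
  { unfold M. destruct (archimed (2 * Cmod w)) as [H1 _]. pose proof (Cmod_ge_0 w).
    assert (0 <= up (2 * Cmod w))%Z by (apply le_IZR; lra).
    rewrite INR_IZR_INZ, Z2Nat.id by lia. lra. }
  destruct (finite_min_pos (fun m => Cmod (w + natC m)) M) as [c0 [Hc0 Hc0']].
  { intros m. pose proof (Cmod_ge_0 (w + natC m)). destruct (Req_dec (Cmod (w + natC m)) 0).
    apply Cmod_eq_0 in H0. exfalso; eapply nonpole_add_natC; eauto. lra. }
  pose proof (pos_INR M).
  set (c := Rmin (1/2) (c0 / (INR M + 1))).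
  assert (Hcpos : (0 < c)%R). { apply Rmin_pos. lra. apply Rdiv_lt_0_compat; lra. }
  assert (Hc1 : (c <= c0 / (INR M + 1))%R) by apply Rmin_r.
  assert (Hc2 : (c <= 1/2)%R) by apply Rmin_l.
  assert (Hcc0 : (c0 / (INR M + 1) <= c0)%R).
  { unfold Rdiv. rewrite <- (Rmult_1_r c0) at 2. apply Rmult_le_compat_l. lra. apply Rinv_le_1. lra. }
  exists c. split. lra. split.
  - specialize (Hc0' O ltac:(lia)). unfold natC in Hc0'. simpl in Hc0'. rewrite Cplus_0_r in Hc0'. lra.
  - intros j. destruct (Compare_dec.le_lt_dec (S j) M).
    + specialize (Hc0' (S j) l). unfold natC in Hc0'. fold (succR j) in Hc0'.
      assert (succR j <= INR M + 1)%R. { unfold succR. apply le_INR in l. lra. }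
      pose proof (succR_ge1 j).
      apply Rle_trans with (c0 / (INR M + 1) * succR j)%R. apply Rmult_le_compat_r; lra.
      apply Rle_trans with c0; auto.
      replace (c0 / (INR M + 1) * succR j)%R with (c0 * (succR j / (INR M + 1)))%R by (field; lra).
      rewrite <- (Rmult_1_r c0) at 2. apply Rmult_le_compat_l. lra.
      unfold Rdiv. apply Rmult_le_reg_r with (INR M + 1)%R. lra. rewrite Rmult_assoc, Rinv_l; lra.
    + assert (INR M <= succR j)%R. { unfold succR. apply le_INR. lia. }
      pose proof (Cmod_add_ge w (RtoC (succR j))). rewrite Cmod_R, Rabs_pos_eq in H1 by (pose proof (succR_ge1 j); lra).
      pose proof (succR_ge1 j). nra.
Qed.

(* [Gamma w] is the limit of [/ w * cprod (gamma_factor w) n] (lemma [Gamma_product]). *)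
Definition gamma_factor (w : C) (j : nat) : C := cexp (w * RtoC (log_step j)) * (RtoC (succR j) / (w + RtoC (succR j))).

Lemma poch_S_l x m : poch x (S m) = x * poch (x + 1) m.
Proof.
  induction m.
  - simpl. unfold natC. simpl. ring.
  - change (poch x (S (S m))) with (poch x (S m) * (x + natC (S m))). rewrite IHm.
    simpl. rewrite natC_S. ring.
Qed.

Lemma poch_neq0 x n : (forall j, (j < n)%nat -> x + natC j <> 0) -> poch x n <> 0.
Proof.
  induction n; simpl; intros H.
  - intros E. apply (f_equal fst) in E. simpl in E. lra.
  - apply Cmult_neq_0. apply IHn; intros; apply H; lia. apply H; lia.
Qed.

Lemma succR_natC j : RtoC (succR j) = natC j + 1.
Proof. unfold succR. rewrite <- natC_S. reflexivity. Qed.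

Lemma cprod_cexp_log_step w n : cprod (fun j => cexp (w * RtoC (log_step j))) n = cexp (w * RtoC (ln (INR (S n)))).
Proof.
  induction n.
  - simpl. rewrite ln_1. replace (w * RtoC 0) with (RtoC 0) by ring. rewrite cexp_0. ring.
  - simpl cprod. rewrite IHn, <- cexp_plus. f_equal. unfold log_step.
    rewrite RtoC_minus. ring.
Qed.

Lemma cprod_succ_ratio_poch w n : ~ nonpos_int w ->
  cprod (fun j => RtoC (succR j) / (w + RtoC (succR j))) n * poch (w + 1) n = natC (fact n).
Proof.
  intros Hw. induction n.
  - simpl. unfold natC. simpl. ring.
  - simpl cprod. simpl poch.
    assert (Hk : w + 1 + natC n = w + RtoC (succR n)) by (rewrite succR_natC; ring).
    rewrite Hk.
    assert (Hnz : w + RtoC (succR n) <> 0). { rewrite succR_natC. replace (w + (natC n + 1)) with (w + natC (S n)) by (rewrite natC_S; ring). apply nonpole_add_natC; auto. }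
    replace (cprod (fun j => RtoC (succR j) / (w + RtoC (succR j))) n * (RtoC (succR n) / (w + RtoC (succR n))) * (poch (w + 1) n * (w + RtoC (succR n))))
      with (cprod (fun j => RtoC (succR j) / (w + RtoC (succR j))) n * poch (w + 1) n * RtoC (succR n)) by (field; auto).
    rewrite IHn. unfold natC, succR. rewrite <- RtoC_mult. f_equal.
    change (fact (S n)) with (S n * fact n)%nat. rewrite mult_INR. ring.
Qed.

Lemma poch_succ_neq0 w n : ~ nonpos_int w -> poch (w + 1) n <> 0.
Proof.
  intros Hw. apply poch_neq0. intros j _. replace (w + 1 + natC j) with (w + natC (S j)) by (rewrite natC_S; ring).
  apply nonpole_add_natC; auto.
Qed.

Lemma nonpole_neq0 w : ~ nonpos_int w -> w <> 0.
Proof. intros Hw. pose proof (nonpole_add_natC w O Hw). unfold natC in H. simpl in H. rewrite Cplus_0_r in H. auto. Qed.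

Lemma nonpole_add_succR_neq0 w j : ~ nonpos_int w -> w + RtoC (succR j) <> 0.
Proof. intros Hw. rewrite succR_natC. replace (w + (natC j + 1)) with (w + natC (S j)) by (rewrite natC_S; ring). apply nonpole_add_natC; auto. Qed.

Lemma gauss_seq_gamma_factor w n : ~ nonpos_int w ->
  gauss_seq w (S n) = / w * cprod (gamma_factor w) n * (RtoC (succR n) / (w + RtoC (succR n))).
Proof.
  intros Hw. unfold gauss_seq. rewrite cpow_nat_cexp, <- cprod_cexp_log_step.
  rewrite (poch_S_l w (S n)). simpl (poch (w + 1) (S n)).
  assert (Hk : w + 1 + natC n = w + RtoC (succR n)) by (rewrite succR_natC; ring). rewrite Hk.
  unfold gamma_factor. rewrite cprod_mult.
  pose proof (cprod_succ_ratio_poch w n Hw) as K.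
  pose proof (poch_succ_neq0 w n Hw) as P. pose proof (nonpole_neq0 w Hw) as W. pose proof (nonpole_add_succR_neq0 w n Hw) as WK.
  assert (F : natC (fact (S n)) = natC (fact n) * RtoC (succR n)).
  { unfold natC, succR. rewrite <- RtoC_mult. f_equal. change (fact (S n)) with (S n * fact n)%nat. rewrite mult_INR. ring. }
  rewrite F, <- K. field. auto.
Qed.

Lemma dominated_of_inv_sqr (f : nat -> C) (A : R) : (forall j, (Cmod (f j) <= A / (succR j * succR j))%R) -> dominated f (2 * A).
Proof.
  intros H j. eapply Rle_trans. apply H. pose proof (inv_sqr_le_tele_weight j).
  assert (0 <= A)%R. { pose proof (H O). pose proof (Cmod_ge_0 (f O)). pose proof (succR_ge1 O).
    assert (0 < / (succR O * succR O))%R by (apply Rinv_0_lt_compat; nra). unfold Rdiv in H1. nra. }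
  unfold Rdiv in *. rewrite Rmult_1_l in H0. replace (2 * A * tele_weight j)%R with (A * (2 * tele_weight j))%R by ring.
  apply Rmult_le_compat_l; auto.
Qed.

Definition gamma_factor_inv (w : C) (j : nat) : C := cexp (- w * RtoC (log_step j)) * ((w + RtoC (succR j)) / RtoC (succR j)).

Lemma succR_neq0 j : RtoC (succR j) <> 0.
Proof. intros E. apply (f_equal fst) in E. simpl in E. pose proof (succR_ge1 j). lra. Qed.

Lemma cexp_mul_opp a : cexp a * cexp (- a) = 1.
Proof. rewrite <- cexp_plus. replace (a + - a) with (RtoC 0) by ring. apply cexp_0. Qed.

Lemma gamma_factor_mul_inv w j : ~ nonpos_int w -> gamma_factor w j * gamma_factor_inv w j = 1.
Proof.
  intros Hw. unfold gamma_factor, gamma_factor_inv. pose proof (cexp_mul_opp (w * RtoC (log_step j))) as E.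
  replace (- w * RtoC (log_step j)) with (- (w * RtoC (log_step j))) by ring.
  pose proof (succR_neq0 j). pose proof (nonpole_add_succR_neq0 w j Hw).
  transitivity (cexp (w * RtoC (log_step j)) * cexp (- (w * RtoC (log_step j))) * ((RtoC (succR j) / (w + RtoC (succR j))) * ((w + RtoC (succR j)) / RtoC (succR j)))).
  ring. rewrite E. field. auto.
Qed.

Lemma Cmod_RtoC_pos (k : R) : (0 <= k)%R -> Cmod (RtoC k) = k.
Proof. intros. rewrite Cmod_R. apply Rabs_pos_eq; auto. Qed.

Definition digamma_term (z : C) (j : nat) : C := RtoC (log_step j) - / (z + RtoC (succR j)).

Section GammaFactorBounds.
Variable w : C.
Variable c : R.
Hypothesis Hc : (0 < c <= 1)%R.
Hypothesis Hsep : forall j, (c * succR j <= Cmod (w + RtoC (succR j)))%R.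

Lemma gamma_factor_sub1_le j : (Cmod (gamma_factor w j - 1) <= (Cmod w + quad_const c (Cmod w) * (Cmod w * Cmod w)) / (succR j * succR j))%R.
Proof.
  pose proof (succR_ge1 j) as Hk. pose proof (log_step_bounds j) as [_ Hl]. pose proof (log_step_nonneg j). pose proof Hc as [Hc0 Hc1].
  pose proof (Cmod_cexp_mul_ratio_sub_linear_le (RtoC (succR j)) w (log_step j) (succR j) c (Cmod w) Hk (proj1 Hc) H Hl) as K.
  rewrite Cmod_RtoC_pos in K by lra. rewrite Cplus_comm in K.
  specialize (K ltac:(nra) (Hsep j) (Rle_refl _)).
  replace (gamma_factor w j - 1) with ((cexp (w * RtoC (log_step j)) * (RtoC (succR j) / (w + RtoC (succR j))) - 1 - w * (RtoC (log_step j) - / RtoC (succR j))) + w * (RtoC (log_step j) - / RtoC (succR j))) by (unfold gamma_factor; ring).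
  eapply Rle_trans. apply Cmod_triangle. rewrite Cmod_mult.
  pose proof (log_step_sub_inv_le j). pose proof (Cmod_ge_0 w).
  assert (Cmod w * Cmod (RtoC (log_step j) - / RtoC (succR j)) <= Cmod w * (1 / (succR j * succR j)))%R by (apply Rmult_le_compat_l; auto).
  replace ((Cmod w + quad_const c (Cmod w) * (Cmod w * Cmod w)) / (succR j * succR j))%R with
    (quad_const c (Cmod w) * (Cmod w * Cmod w) / (succR j * succR j) + Cmod w * (1 / (succR j * succR j)))%R by (field; lra).
  lra.
Qed.

Lemma digamma_term_le j : (Cmod (digamma_term w j) <= (1 + Cmod w / c) / (succR j * succR j))%R.
Proof.
  pose proof (succR_ge1 j) as Hk. pose proof Hc as [Hc0 Hc1].
  assert (Hwk : w + RtoC (succR j) <> 0) by (eapply neq0_of_Cmod_ge; [|exact (Hsep j)]; nra).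
  unfold digamma_term.
  replace (RtoC (log_step j) - / (w + RtoC (succR j))) with ((RtoC (log_step j) - / RtoC (succR j)) + w / (RtoC (succR j) * (w + RtoC (succR j)))) by (field; split; auto; apply succR_neq0).
  eapply Rle_trans. apply Cmod_triangle.
  pose proof (log_step_sub_inv_le j). pose proof (Cmod_ge_0 w).
  assert (B2 : (Cmod (w / (RtoC (succR j) * (w + RtoC (succR j)))) <= Cmod w / c / (succR j * succR j))%R).
  { rewrite Cmod_div, Cmod_mult, Cmod_RtoC_pos by (try lra; apply Cmult_neq_0; auto; apply succR_neq0).
    pose proof (Hsep j). unfold Rdiv. rewrite (Rmult_assoc (Cmod w)). apply Rmult_le_compat_l; auto.
    replace (/ c * / (succR j * succR j))%R with (/ (succR j * (c * succR j)))%R by (field; lra).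
    apply Rinv_le_contravar. apply Rmult_lt_0_compat; [lra | apply Rmult_lt_0_compat; lra]. apply Rmult_le_compat_l; lra. }
  replace ((1 + Cmod w / c) / (succR j * succR j))%R with (1 / (succR j * succR j) + Cmod w / c / (succR j * succR j))%R by (field; lra).
  lra.
Qed.


Lemma gamma_factor_inv_sub1_le j : (Cmod (gamma_factor_inv w j - 1) <= (Cmod w + Cmod w * Cmod w / c + quad_const c (Cmod w) * (Cmod w * Cmod w)) / (succR j * succR j))%R.
Proof.
  pose proof (succR_ge1 j) as Hk. pose proof (log_step_bounds j) as [_ Hl]. pose proof (log_step_nonneg j). pose proof Hc as [Hc0 Hc1].
  pose proof (Cmod_cexp_mul_ratio_sub_linear_le (w + RtoC (succR j)) (- w) (log_step j) (succR j) c (Cmod w) Hk (proj1 Hc) H Hl (Hsep j)) as K.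
  replace (w + RtoC (succR j) + - w) with (RtoC (succR j)) in K by ring.
  rewrite Cmod_RtoC_pos in K by lra. rewrite Cmod_opp in K.
  specialize (K ltac:(nra) (Rle_refl _)).
  replace (gamma_factor_inv w j - 1) with ((cexp (- w * RtoC (log_step j)) * ((w + RtoC (succR j)) / RtoC (succR j)) - 1 - - w * (RtoC (log_step j) - / (w + RtoC (succR j)))) + - w * digamma_term w j) by (unfold gamma_factor_inv, digamma_term; ring).
  eapply Rle_trans. apply Cmod_triangle. rewrite Cmod_mult, Cmod_opp.
  pose proof (digamma_term_le j). pose proof (Cmod_ge_0 w).
  assert (Cmod w * Cmod (digamma_term w j) <= Cmod w * ((1 + Cmod w / c) / (succR j * succR j)))%R by (apply Rmult_le_compat_l; auto).
  replace ((Cmod w + Cmod w * Cmod w / c + quad_const c (Cmod w) * (Cmod w * Cmod w)) / (succR j * succR j))%R with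
    (quad_const c (Cmod w) * (Cmod w * Cmod w) / (succR j * succR j) + Cmod w * ((1 + Cmod w / c) / (succR j * succR j)))%R by (field; lra).
  lra.
Qed.
End GammaFactorBounds.

Lemma succR_ratio_converges w c : (0 < c <= 1)%R -> (forall j, (c * succR j <= Cmod (w + RtoC (succR j)))%R) ->
  Clim_seq (fun n => RtoC (succR n) / (w + RtoC (succR n))) 1.
Proof.
  intros [Hc0 Hc1] Hsep eps.
  destruct (div_succ_eventually_lt (Cmod w / c) eps) as [N K]. apply Rdiv_le_0_compat. apply Cmod_ge_0. lra.
  exists N. intros n Hn. specialize (K n Hn).
  pose proof (Hsep n). pose proof (succR_ge1 n).
  assert (Hwk : w + RtoC (succR n) <> 0) by (eapply neq0_of_Cmod_ge; [|exact H]; nra).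
  replace (RtoC (succR n) / (w + RtoC (succR n)) - 1) with (- w / (w + RtoC (succR n))) by (field; auto).
  rewrite Cmod_div, Cmod_opp by auto.
  eapply Rle_lt_trans. 2: exact K.
  replace (INR n + 1)%R with (succR n) by (unfold succR; rewrite S_INR; ring).
  unfold Rdiv. rewrite Rmult_assoc. apply Rmult_le_compat_l. apply Cmod_ge_0.
  rewrite <- Rinv_mult. apply Rinv_le_contravar. nra. lra.
Qed.

Lemma cprod_1 n : cprod (fun _ => 1) n = 1.
Proof. induction n; simpl; auto. rewrite IHn. ring. Qed.

Lemma Gamma_product w : ~ nonpos_int w -> exists Q, Clim_seq (cprod (gamma_factor w)) Q /\ Q <> 0 /\ Gamma w = Q / w.
Proof.
  intros Hw. destruct (pole_separation w Hw) as [c [Hc [_ Hsep]]].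
  set (A1 := (Cmod w + quad_const c (Cmod w) * (Cmod w * Cmod w))%R).
  set (A2 := (Cmod w + Cmod w * Cmod w / c + quad_const c (Cmod w) * (Cmod w * Cmod w))%R).
  destruct (cprod_1plus_converges (fun j => gamma_factor w j - 1) (2 * A1)) as [Q HQ].
  { apply dominated_of_inv_sqr. intros j. apply gamma_factor_sub1_le; auto. }
  destruct (cprod_1plus_converges (fun j => gamma_factor_inv w j - 1) (2 * A2)) as [Qi HQi].
  { apply dominated_of_inv_sqr. intros j. apply gamma_factor_inv_sub1_le; auto. }
  assert (HQ' : Clim_seq (cprod (gamma_factor w)) Q).
  { eapply Clim_ext. 2: exact HQ. intros n. apply cprod_ext. intros; ring. }
  assert (HQi' : Clim_seq (cprod (gamma_factor_inv w)) Qi).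
  { eapply Clim_ext. 2: exact HQi. intros n. apply cprod_ext. intros; ring. }
  assert (HQQ : Q * Qi = 1).
  { pose proof (Clim_mult _ _ _ _ HQ' HQi') as M.
    apply (Clim_unique (fun n => cprod (gamma_factor w) n * cprod (gamma_factor_inv w) n)); auto.
    eapply Clim_ext. 2: apply Clim_const. intros n. rewrite <- cprod_mult.
    rewrite <- (cprod_1 n). apply cprod_ext. intros. rewrite gamma_factor_mul_inv; auto. }
  exists Q. split; auto. split.
  { intros E. rewrite E in HQQ. apply (f_equal fst) in HQQ. simpl in HQQ. lra. }
  unfold Gamma. apply lim_seq_of_Clim. apply Clim_of_shift_succ.
  eapply Clim_ext. intros n. symmetry. apply gauss_seq_gamma_factor; auto.
  replace (Q / w) with (/ w * Q * 1) by (field; apply nonpole_neq0; auto).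
  apply Clim_mult. apply Clim_scal. auto. eapply succR_ratio_converges; eauto.
Qed.

(** * The digamma series *)

Section GammaFactorRatio.
Variable z : C.
Variable c : R.
Hypothesis Hc : (0 < c <= 1)%R.
Hypothesis Hsep : forall j, (c * succR j <= Cmod (z + RtoC (succR j)))%R.

Lemma gamma_factor_ratio h j : ~ nonpos_int (z + h) -> ~ nonpos_int z ->
  gamma_factor (z + h) j * gamma_factor_inv z j = cexp (h * RtoC (log_step j)) * ((z + RtoC (succR j)) / (z + RtoC (succR j) + h)).
Proof.
  intros Hzh Hz. unfold gamma_factor, gamma_factor_inv.
  pose proof (nonpole_add_succR_neq0 _ j Hzh). pose proof (nonpole_add_succR_neq0 _ j Hz). pose proof (succR_neq0 j).
  replace (cexp ((z + h) * RtoC (log_step j))) with (cexp (h * RtoC (log_step j)) * cexp (z * RtoC (log_step j))) by (rewrite <- cexp_plus; f_equal; ring).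
  replace (- z * RtoC (log_step j)) with (- (z * RtoC (log_step j))) by ring.
  transitivity (cexp (h * RtoC (log_step j)) * (cexp (z * RtoC (log_step j)) * cexp (- (z * RtoC (log_step j)))) * (RtoC (succR j) / (z + h + RtoC (succR j)) * ((z + RtoC (succR j)) / RtoC (succR j)))).
  ring. rewrite cexp_mul_opp.
  replace (z + RtoC (succR j) + h) with (z + h + RtoC (succR j)) by ring. field. auto.
Qed.

Lemma gamma_factor_ratio_sub_linear_le h j : (Cmod h <= c / 2)%R -> ~ nonpos_int (z + h) -> ~ nonpos_int z ->
  (Cmod (gamma_factor (z + h) j * gamma_factor_inv z j - 1 - h * digamma_term z j) <= quad_const (c / 2) 1 * (Cmod h * Cmod h) / (succR j * succR j))%R.
Proof.
  intros Hh Hzh Hz. rewrite gamma_factor_ratio by auto.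
  pose proof (succR_ge1 j) as Hk. pose proof (log_step_bounds j) as [_ Hl]. pose proof (log_step_nonneg j). pose proof Hc as [Hc0 Hc1].
  apply Cmod_cexp_mul_ratio_sub_linear_le; auto. lra.
  - pose proof (Hsep j). nra.
  - pose proof (Hsep j). pose proof (Cmod_add_ge h (z + RtoC (succR j))). replace (h + (z + RtoC (succR j))) with (z + RtoC (succR j) + h) in H1 by ring. nra.
  - lra.
Qed.

Lemma gamma_factor_ratio_sub1_le h j : (Cmod h <= c / 2)%R -> ~ nonpos_int (z + h) -> ~ nonpos_int z ->
  (Cmod (gamma_factor (z + h) j * gamma_factor_inv z j - 1)
   <= Cmod h * ((1 + Cmod z / c) + quad_const (c / 2) 1) / (succR j * succR j))%R.
Proof.
  intros Hh Hzh Hz. pose proof Hc as [Hc0 Hc1].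
  set (A := (1 + Cmod z / c)%R). set (K := quad_const (c / 2) 1). set (hm := Cmod h) in *.
  assert (HK : (0 <= K)%R) by (apply quad_const_nonneg; lra).
  assert (Hhm : (0 <= hm)%R) by apply Cmod_ge_0.
  assert (Hhm1 : (hm <= 1)%R) by lra.
  set (V := gamma_factor (z + h) j * gamma_factor_inv z j - 1).
  pose proof (gamma_factor_ratio_sub_linear_le h j Hh Hzh Hz) as Va. fold V K hm in Va.
  pose proof (digamma_term_le z c Hc Hsep j). pose proof (succR_ge1 j) as Hk.
  assert (Hk2 : (0 < succR j * succR j)%R) by nra.
  replace V with ((V - h * digamma_term z j) + h * digamma_term z j) by ring.
  eapply Rle_trans. apply Cmod_triangle. rewrite Cmod_mult. fold hm.
  assert (hm * Cmod (digamma_term z j) <= hm * (A / (succR j * succR j)))%R by (apply Rmult_le_compat_l; auto).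
  assert (K * (hm * hm) / (succR j * succR j) <= K * hm / (succR j * succR j))%R.
  { unfold Rdiv. apply Rmult_le_compat_r. left; apply Rinv_0_lt_compat; lra.
    apply Rmult_le_compat_l; auto. assert (hm * hm <= hm * 1)%R by (apply Rmult_le_compat_l; lra). lra. }
  replace (hm * (A + K) / (succR j * succR j))%R
    with (hm * (A / (succR j * succR j)) + K * hm / (succR j * succR j))%R by (field; lra).
  lra.
Qed.

End GammaFactorRatio.

Lemma nonpole_near z c h : (0 < c <= 1)%R -> (c <= Cmod z)%R ->
  (forall j, (c * succR j <= Cmod (z + RtoC (succR j)))%R) -> (Cmod h < c / 2)%R -> ~ nonpos_int (z + h).
Proof.
  intros [Hc0 Hc1] Hcz Hsep Hh [m E].
  assert (E2 : z + natC m = - h) by (replace z with (z + h - h) by ring; rewrite E; ring).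
  destruct m.
  - unfold natC in E2. simpl in E2. rewrite Cplus_0_r in E2. rewrite E2, Cmod_opp in Hcz. lra.
  - rewrite natC_S, <- succR_natC in E2. pose proof (Hsep m). rewrite E2, Cmod_opp in H. pose proof (succR_ge1 m). nra.
Qed.

Lemma cprod_gamma_factor_inv z n : ~ nonpos_int z -> cprod (gamma_factor_inv z) n = / cprod (gamma_factor z) n.
Proof.
  intros Hz. assert (P : cprod (gamma_factor z) n * cprod (gamma_factor_inv z) n = 1).
  { rewrite <- cprod_mult. rewrite <- (cprod_1 n). apply cprod_ext. intros; apply gamma_factor_mul_inv; auto. }
  assert (cprod (gamma_factor z) n <> 0). { intros E. rewrite E in P. apply (f_equal fst) in P. simpl in P. lra. }
  replace (cprod (gamma_factor_inv z) n) with (/ cprod (gamma_factor z) n * (cprod (gamma_factor z) n * cprod (gamma_factor_inv z) n)) by (field; auto).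
  rewrite P. ring.
Qed.

Definition ratio_const (z : C) (c : R) : R :=
  let A := (1 + Cmod z / c)%R in let K := quad_const (c / 2) 1 in let B := (2 * (A + K))%R in
  (2 * K + B * B * exp B)%R.

Lemma Gamma_product_ratio_sub_linear_le z c Qz Cz h Qh : ~ nonpos_int z -> (0 < c <= 1)%R -> (c <= Cmod z)%R ->
  (forall j, (c * succR j <= Cmod (z + RtoC (succR j)))%R) ->
  Clim_seq (cprod (gamma_factor z)) Qz -> Qz <> 0 -> Clim_seq (csum (digamma_term z)) Cz ->
  (Cmod h < c / 2)%R -> Clim_seq (cprod (gamma_factor (z + h))) Qh ->
  (Cmod (Qh / Qz - 1 - h * Cz) <= ratio_const z c * (Cmod h * Cmod h))%R.
Proof.
  intros Hz Hc Hcz Hsep HQz HQz0 HCz Hh HQh.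
  pose proof Hc as [Hc0 Hc1].
  assert (Hzh : ~ nonpos_int (z + h)) by (eapply nonpole_near; eauto).
  set (A := (1 + Cmod z / c)%R). set (K := quad_const (c / 2) 1). set (B := (2 * (A + K))%R).
  assert (HA : (0 <= A)%R).
  { unfold A. pose proof (Cmod_ge_0 z). assert (0 <= Cmod z / c)%R by (apply Rdiv_le_0_compat; lra). lra. }
  assert (HK : (0 <= K)%R) by (apply quad_const_nonneg; lra).
  set (hm := Cmod h). assert (Hhm : (0 <= hm)%R) by apply Cmod_ge_0.
  assert (Hhm1 : (hm <= 1)%R) by (unfold hm; lra).
  set (V := fun j => gamma_factor (z + h) j * gamma_factor_inv z j - 1).
  assert (Va : forall j, (Cmod (V j - h * digamma_term z j)%C <= K * (hm * hm) / (succR j * succR j))%R).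
  { intros j. unfold V. apply gamma_factor_ratio_sub_linear_le; auto. lra. }
  assert (Vb : forall j, (Cmod (V j) <= hm * (A + K) / (succR j * succR j))%R).
  { intros j. apply (gamma_factor_ratio_sub1_le z c Hc Hsep h j); [lra | exact Hzh | exact Hz]. }
  assert (HV : dominated V (hm * B)).
  { replace (hm * B)%R with (2 * (hm * (A + K)))%R by (unfold B; ring). apply dominated_of_inv_sqr. exact Vb. }
  assert (HVt : dominated (fun j => V j - h * digamma_term z j) (2 * (K * (hm * hm)))).
  { apply dominated_of_inv_sqr. exact Va. }
  assert (Main : forall n, (Cmod (cprod (fun j => 1 + V j) n - 1 - csum (fun j => h * digamma_term z j) n)%C
                            <= ratio_const z c * (hm * hm))%R).
  { intros n. eapply Rle_trans. apply (Cmod_cprod_sub1_sub_csum_dominated _ _ _ _ n HV HVt).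
    assert (HB : (0 <= B)%R) by (unfold B; lra).
    assert (exp (hm * B) <= exp B)%R by (apply exp_le_exp_of_le; nra).
    pose proof (exp_pos (hm * B)).
    assert ((hm * B) * (hm * B) * exp (hm * B) <= (hm * hm) * (B * B * exp B))%R.
    { replace ((hm * B) * (hm * B) * exp (hm * B))%R with ((hm * hm) * (B * B * exp (hm * B)))%R by ring.
      apply Rmult_le_compat_l. nra. apply Rmult_le_compat_l; nra. }
    unfold ratio_const. fold A K B. nra. }
  assert (Lim : Clim_seq (fun n => cprod (fun j => 1 + V j) n - 1 - csum (fun j => h * digamma_term z j) n)
                  (Qh / Qz - 1 - h * Cz)).
  { apply Clim_minus. apply Clim_minus. 2: apply Clim_const.
    2: { eapply Clim_ext. intros n. symmetry. apply csum_scal. apply Clim_scal; auto. }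
    eapply Clim_ext. intros n. symmetry.
    transitivity (cprod (gamma_factor (z + h)) n * cprod (gamma_factor_inv z) n).
    rewrite <- cprod_mult. apply cprod_ext. intros. unfold V. ring.
    rewrite cprod_gamma_factor_inv by auto. reflexivity.
    apply Clim_div; auto. }
  replace (Qh / Qz - 1 - h * Cz) with (Qh / Qz - 1 - h * Cz - 0) by ring.
  apply (Clim_le _ _ _ _ Lim). exists O. intros n _.
  replace (_ - 0) with (cprod (fun j => 1 + V j) n - 1 - csum (fun j => h * digamma_term z j) n) by ring.
  apply Main.
Qed.

Lemma ratio_const_nonneg z c : (0 < c)%R -> (0 <= ratio_const z c)%R.
Proof.
  intros Hc0. unfold ratio_const. cbv zeta.
  set (A := (1 + Cmod z / c)%R). set (K := quad_const (c / 2) 1).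
  assert (0 <= A)%R by (unfold A; pose proof (Cmod_ge_0 z); assert (0 <= Cmod z / c)%R by (apply Rdiv_le_0_compat; lra); lra).
  assert (0 <= K)%R by (apply quad_const_nonneg; lra).
  pose proof (exp_pos (2 * (A + K))).
  assert (0 <= (2 * (A + K)) * (2 * (A + K)) * exp (2 * (A + K)))%R by (apply Rmult_le_pos; [nra|lra]).
  lra.
Qed.
Section DiffQuotient.
Variables (z : C) (c : R) (Qz Cz : C).
Hypothesis Hz : ~ nonpos_int z.
Hypothesis Hc : (0 < c <= 1)%R.
Hypothesis Hcz : (c <= Cmod z)%R.
Hypothesis Hsep : forall j, (c * succR j <= Cmod (z + RtoC (succR j)))%R.
Hypothesis HQz : Clim_seq (cprod (gamma_factor z)) Qz.
Hypothesis HQz0 : Qz <> 0.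
Hypothesis HCz : Clim_seq (csum (digamma_term z)) Cz.
Hypothesis HGz : Gamma z = Qz / z.

Definition diff_quot_const : R :=
  (Cmod Qz * Cmod (z * Cz - 1) / (c * c * (c / 2)) + Cmod Qz * ratio_const z c / (c / 2))%R.

Lemma diff_quot_const_nonneg : (0 <= diff_quot_const)%R.
Proof.
  pose proof Hc as [Hc0 Hc1]. unfold diff_quot_const.
  assert (0 <= ratio_const z c)%R by (apply ratio_const_nonneg; lra).
  pose proof (Cmod_ge_0 Qz). pose proof (Cmod_ge_0 (z * Cz - 1)).
  assert (0 < c * c * (c / 2))%R by (repeat apply Rmult_lt_0_compat; lra).
  assert (0 <= Cmod Qz * Cmod (z * Cz - 1) / (c * c * (c / 2)))%R by (apply Rdiv_le_0_compat; nra).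
  assert (0 <= Cmod Qz * ratio_const z c / (c / 2))%R by (apply Rdiv_le_0_compat; nra). lra.
Qed.

(* Write [Gamma (z + h) = Qz (1 + h Cz + rem) / (z + h)]; then [rem = O(h^2)]. *)
Lemma Gamma_diff_quotient_sub_le (h : C) : h <> 0 -> (Cmod h < c / 2)%R ->
  (Cmod ((Gamma (z + h) - Gamma z) / h - Qz / z * (Cz - / z)) <= Cmod h * diff_quot_const)%R.
Proof.
  intros Hh0 Hh. pose proof Hc as [Hc0 Hc1].
  assert (Hzh : ~ nonpos_int (z + h)) by (eapply nonpole_near; eauto).
  destruct (Gamma_product (z + h) Hzh) as [Qh [HQh [_ HGh]]].
  pose proof (Gamma_product_ratio_sub_linear_le z c Qz Cz h Qh Hz Hc Hcz Hsep HQz HQz0 HCz Hh HQh) as R.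
  set (rem := Qh / Qz - 1 - h * Cz) in R.
  assert (Hz0 : z <> 0) by (apply nonpole_neq0; auto).
  assert (Hzh0 : z + h <> 0) by (apply nonpole_neq0; auto).
  assert (Eq : (Gamma (z + h) - Gamma z) / h - Qz / z * (Cz - / z) =
               Qz * (- h) * (z * Cz - 1) / (z * z * (z + h)) + Qz * rem / (h * (z + h))).
  { rewrite HGh, HGz. replace Qh with (Qz * (1 + h * Cz + rem)) by (unfold rem; field; auto).
    field. repeat split; auto. }
  rewrite Eq. clear Eq.
  assert (Hzhm : (c / 2 <= Cmod (z + h))%R).
  { pose proof (Cmod_add_ge h z). replace (h + z) with (z + h) in H by ring. lra. }
  assert (Hhp : (0 < Cmod h)%R).
  { pose proof (Cmod_ge_0 h). destruct (Req_dec (Cmod h) 0). apply Cmod_eq_0 in H0. contradiction. lra. }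
  eapply Rle_trans. apply Cmod_triangle.
  assert (T1 : (Cmod (Qz * - h * (z * Cz - 1) / (z * z * (z + h)))
                <= Cmod h * (Cmod Qz * Cmod (z * Cz - 1) / (c * c * (c / 2))))%R).
  { rewrite Cmod_div by (repeat apply Cmult_neq_0; auto). rewrite !Cmod_mult, Cmod_opp.
    pose proof (Cmod_ge_0 Qz). pose proof (Cmod_ge_0 (z * Cz - 1)).
    replace (Cmod Qz * Cmod h * Cmod (z * Cz - 1) / (Cmod z * Cmod z * Cmod (z + h)))%R with
      (Cmod h * (Cmod Qz * Cmod (z * Cz - 1)) * / (Cmod z * Cmod z * Cmod (z + h)))%R by (field; repeat split; nra).
    unfold Rdiv. rewrite Rmult_assoc. apply Rmult_le_compat_l. lra. apply Rmult_le_compat_l. nra.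
    apply Rinv_le_contravar. repeat apply Rmult_lt_0_compat; lra.
    apply Rmult_le_compat; try nra. }
  assert (T2 : (Cmod (Qz * rem / (h * (z + h))) <= Cmod h * (Cmod Qz * ratio_const z c / (c / 2)))%R).
  { rewrite Cmod_div by (apply Cmult_neq_0; auto). rewrite !Cmod_mult.
    pose proof (Cmod_ge_0 Qz).
    apply Rle_trans with (Cmod Qz * (ratio_const z c * (Cmod h * Cmod h)) / (Cmod h * (c / 2)))%R.
    { unfold Rdiv. apply Rmult_le_compat. apply Rmult_le_pos; auto; apply Cmod_ge_0.
      left; apply Rinv_0_lt_compat; nra. apply Rmult_le_compat_l; auto.
      apply Rinv_le_contravar. nra. apply Rmult_le_compat_l; lra. }
    right. field. lra. }
  unfold diff_quot_const. lra.
Qed.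

Lemma Gamma'_eq : Gamma' z = Qz / z * (Cz - / z).
Proof.
  pose proof Hc as [Hc0 Hc1]. pose proof diff_quot_const_nonneg as HM.
  set (M := diff_quot_const) in *.
  unfold Gamma'. apply lim_locally'_0_of_Cmod. intros eps.
  assert (Hd : (0 < Rmin (c / 2) (eps / (M + 1)))%R).
  { apply Rmin_pos. lra. apply Rdiv_lt_0_compat. apply cond_pos. lra. }
  exists (mkposreal _ Hd). intros h Hh0 Hh. simpl in Hh.
  assert (Hh1 : (Cmod h < c / 2)%R) by (eapply Rlt_le_trans; [exact Hh | apply Rmin_l]).
  assert (Hh2 : (Cmod h < eps / (M + 1))%R) by (eapply Rlt_le_trans; [exact Hh | apply Rmin_r]).
  replace (RtoC 0 + h) with (z + h - z) by ring.
  eapply Rle_lt_trans. { apply Gamma_diff_quotient_sub_le; auto. }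
  apply Rle_lt_trans with (eps / (M + 1) * M)%R. apply Rmult_le_compat_r; lra.
  destruct eps as [e ep]; simpl in *.
  replace (e / (M + 1) * M)%R with (e - e / (M + 1))%R by (field; lra).
  assert (0 < e / (M + 1))%R by (apply Rdiv_lt_0_compat; lra). lra.
Qed.

End DiffQuotient.

Theorem digamma_series z : ~ nonpos_int z ->
  exists Cz, Clim_seq (csum (digamma_term z)) Cz /\ digamma z = Cz - / z.
Proof.
  intros Hz. destruct (pole_separation z Hz) as [c [Hc [Hcz Hsep]]].
  destruct (csum_converges (digamma_term z) (2 * (1 + Cmod z / c))) as [Cz HCz].
  { apply dominated_of_inv_sqr. apply digamma_term_le; auto. }
  destruct (Gamma_product z Hz) as [Qz [HQz [HQz0 HGz]]].
  exists Cz. split; auto.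
  assert (Hz0 : z <> 0) by (apply nonpole_neq0; auto).
  unfold digamma. rewrite (Gamma'_eq z c Qz Cz), HGz; auto. field. split; auto.
Qed.

(** * A WZ pair *)

Lemma natC_fact_neq0 n : natC (fact n) <> 0.
Proof. intros E. apply (f_equal fst) in E. unfold natC in E. simpl in E. pose proof (lt_0_INR _ (lt_O_fact n)). lra. Qed.

Lemma two_n1_neq0 n : 2 * natC n + 1 <> 0.
Proof. intros E. apply (f_equal fst) in E. unfold natC in E. simpl in E. pose proof (pos_INR n). lra. Qed.

Lemma two_n2_neq0 n : 2 * natC n + 2 <> 0.
Proof. intros E. apply (f_equal fst) in E. unfold natC in E. simpl in E. pose proof (pos_INR n). lra. Qed.

Lemma natC_plus m n : natC (m + n) = natC m + natC n.
Proof. unfold natC. rewrite plus_INR, RtoC_plus. reflexivity. Qed.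

Lemma natC_mult m n : natC (m * n) = natC m * natC n.
Proof. unfold natC. rewrite mult_INR, RtoC_mult. reflexivity. Qed.

Lemma fact_S m : natC (fact (S m)) = (natC m + 1) * natC (fact m).
Proof. change (fact (S m)) with (S m * fact m)%nat. rewrite natC_mult, natC_S. reflexivity. Qed.

Lemma natC_double n : natC (2 * n) = 2 * natC n.
Proof. unfold natC. rewrite mult_INR. simpl (INR 2). rewrite RtoC_mult. f_equal. Qed.

Lemma fact2S n : natC (fact (2 * S n)) = natC (fact (2 * n)) * (2 * natC n + 1) * (2 * natC n + 2).
Proof.
  replace (2 * S n)%nat with (S (S (2 * n))) by lia.
  rewrite !fact_S, natC_S, natC_double. ring.
Qed.

Lemma poch_shift y m : poch (y + 1) m * y = poch y m * (y + natC m).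
Proof.
  rewrite Cmult_comm, <- poch_S_l. simpl. reflexivity.
Qed.

Section WZPair.
Variables a b : C.

Definition num_poch (n : nat) : C := poch (1 + a + b) n * poch (1 + a - b) n * poch (1 - a + b) n * poch (1 - a - b) n.
Definition den_poch (x : C) (n : nat) : C := poch (x + a) n * poch (x - a) n * poch (x + b) n * poch (x - b) n.
Definition sgn (n : nat) : C := Cpow (RtoC (-1)) n.
Definition wz_base (n : nat) (x : C) : C :=
  sgn n * (natC (fact n) * natC (fact n)) * num_poch n / (natC (fact (2 * n)) * den_poch x (S n)).
Definition wz_quad (n : nat) (x : C) : C :=
  5 * natC n * natC n + 2 * (2 + 3 * x) * natC n + (1 + x) * (1 + x) + x * x - a * a - b * b.
Definition wz_F (n : nat) (x : C) : C := 2 * (2 * x + natC n) * wz_base n x.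
Definition wz_G (n : nat) (x : C) : C := wz_quad n x * wz_base n x / (2 * natC n + 1).

Definition avoids_poles (x : C) := forall m, x + a + natC m <> 0 /\ x - a + natC m <> 0 /\ x + b + natC m <> 0 /\ x - b + natC m <> 0.

Lemma avoids_poles_shift x : avoids_poles x -> avoids_poles (x + 1).
Proof. intros H m. destruct (H (S m)) as [H1 [H2 [H3 H4]]]. rewrite natC_S in *.
  repeat split; intros E; [apply H1|apply H2|apply H3|apply H4]; rewrite <- E; ring. Qed.

Lemma den_poch_neq0 x n : avoids_poles x -> den_poch x n <> 0.
Proof.
  intros H. unfold den_poch. repeat apply Cmult_neq_0; apply poch_neq0; intros j _; apply H.
Qed.

Definition wz_step_num (n : nat) : C :=
  - ((natC n + 1) * (natC n + 1)) *
  ((natC n + 1 + a + b) * (natC n + 1 + a - b) * (natC n + 1 - a + b) * (natC n + 1 - a - b)).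
Definition wz_step_den (n : nat) (x : C) : C :=
  (2 * natC n + 1) * (2 * natC n + 2) *
  ((x + a + natC (S n)) * (x - a + natC (S n)) * (x + b + natC (S n)) * (x - b + natC (S n))).

Lemma wz_base_succ_n n x : avoids_poles x ->
  wz_base (S n) x = wz_base n x * wz_step_num n / wz_step_den n x.
Proof.
  intros H. unfold wz_base, wz_step_num, wz_step_den.
  rewrite fact2S.
  rewrite fact_S.
  unfold sgn. simpl Cpow.
  unfold num_poch. simpl poch.
  unfold den_poch. change (poch (x + a) (S (S n))) with (poch (x + a) (S n) * (x + a + natC (S n))).
  change (poch (x - a) (S (S n))) with (poch (x - a) (S n) * (x - a + natC (S n))).
  change (poch (x + b) (S (S n))) with (poch (x + b) (S n) * (x + b + natC (S n))).
  change (poch (x - b) (S (S n))) with (poch (x - b) (S n) * (x - b + natC (S n))).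
  pose proof (den_poch_neq0 x (S n) H) as HD. unfold den_poch in HD.
  destruct (H (S n)) as [H1 [H2 [H3 H4]]].
  pose proof (natC_fact_neq0 n). pose proof (natC_fact_neq0 (2 * n)). pose proof (two_n1_neq0 n).
  pose proof (two_n2_neq0 n).
  field. repeat split; auto.
  all: apply poch_neq0; intros j _; apply H.
Qed.

Lemma wz_base_succ_x n x : avoids_poles x ->
  wz_base n (x + 1) = wz_base n x * ((x + a) * (x - a) * (x + b) * (x - b)) /
     ((x + a + natC (S n)) * (x - a + natC (S n)) * (x + b + natC (S n)) * (x - b + natC (S n))).
Proof.
  intros H. unfold wz_base, den_poch.
  replace (x + 1 + a) with (x + a + 1) by ring. replace (x + 1 - a) with (x - a + 1) by ring.
  replace (x + 1 + b) with (x + b + 1) by ring. replace (x + 1 - b) with (x - b + 1) by ring.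
  destruct (H (S n)) as [H1 [H2 [H3 H4]]]. destruct (H O) as [G1 [G2 [G3 G4]]].
  unfold natC in G1, G2, G3, G4. simpl in G1, G2, G3, G4. rewrite Cplus_0_r in G1, G2, G3, G4.
  pose proof (poch_shift (x + a) (S n)). pose proof (poch_shift (x - a) (S n)).
  pose proof (poch_shift (x + b) (S n)). pose proof (poch_shift (x - b) (S n)).
  assert (Ha : poch (x + a + 1) (S n) = poch (x + a) (S n) * (x + a + natC (S n)) / (x + a)) by (rewrite <- H0; field; auto).
  assert (Hb : poch (x - a + 1) (S n) = poch (x - a) (S n) * (x - a + natC (S n)) / (x - a)) by (rewrite <- H5; field; auto).
  assert (Hc : poch (x + b + 1) (S n) = poch (x + b) (S n) * (x + b + natC (S n)) / (x + b)) by (rewrite <- H6; field; auto).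
  assert (Hd : poch (x - b + 1) (S n) = poch (x - b) (S n) * (x - b + natC (S n)) / (x - b)) by (rewrite <- H7; field; auto).
  rewrite Ha, Hb, Hc, Hd.
  pose proof (natC_fact_neq0 (2 * n)).
  field. repeat split; auto.
  all: apply poch_neq0; intros j _; apply H.
Qed.

Lemma wz_pair n x : avoids_poles x -> wz_F n x - wz_F (S n) x = wz_G n x - wz_G n (x + 1).
Proof.
  intros H. unfold wz_F, wz_G. rewrite wz_base_succ_n, wz_base_succ_x by auto.
  unfold wz_step_num, wz_step_den.
  destruct (H (S n)) as [H1 [H2 [H3 H4]]]. 
  pose proof (two_n1_neq0 n).
  pose proof (two_n2_neq0 n).
  unfold wz_quad. rewrite natC_S in *. 
  field. repeat split; auto.
Qed.

End WZPair.

(** * Decay of the WZ pair along x = alpha + k *)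

Lemma Re_le_Cmod (w : C) : (Re w <= Cmod w)%R.
Proof. pose proof (re_le_Cmod w). pose proof (Rle_abs (Re w)). lra. Qed.

Lemma Re_natC n : Re (natC n) = INR n.
Proof. unfold natC, Re. simpl. reflexivity. Qed.

Lemma Re_ge_negmod (w : C) : (- Cmod w <= Re w)%R.
Proof. pose proof (re_le_Cmod w). pose proof (Rabs_le_between' (Re w) 0 (Cmod w)). 
  pose proof (Rle_abs (- Re w)). rewrite Rabs_Ropp in H1. lra. Qed.

Lemma Cmod_2 : Cmod 2 = 2%R.
Proof. rewrite Cmod_R. apply Rabs_pos_eq. lra. Qed.

Lemma Cmod_natC n : Cmod (natC n) = INR n.
Proof. unfold natC. rewrite Cmod_R. apply Rabs_pos_eq. apply pos_INR. Qed.

Lemma prod4_le (p1 p2 p3 p4 P : R) : (0 <= p1 <= P)%R -> (0 <= p2 <= P)%R -> (0 <= p3 <= P)%R -> (0 <= p4 <= P)%R ->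
  (p1 * p2 * p3 * p4 <= P * P * P * P)%R.
Proof. intros. repeat apply Rmult_le_compat; try apply Rmult_le_pos; try apply Rmult_le_pos; lra. Qed.

Lemma poch_lower y m : (forall j, (1 <= Cmod (y + natC j))%R) -> (Cmod y <= Cmod (poch y (S m)))%R.
Proof.
  intros H. induction m.
  - simpl. unfold natC. simpl. rewrite Cplus_0_r, Cmult_1_l. lra.
  - change (poch y (S (S m))) with (poch y (S m) * (y + natC (S m))). rewrite Cmod_mult.
    pose proof (H (S m)). pose proof (Cmod_ge_0 (poch y (S m))). nra.
Qed.

Section WZBaseBounds.
Variables al a b : C.
Hypothesis Hg : avoids_poles a b al.

Definition shiftn (k : nat) : C := al + natC k.
Definition param_size : R := (Cmod al + Cmod a + Cmod b)%R.

Lemma param_size_nonneg : (0 <= param_size)%R.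
Proof. unfold param_size. pose proof (Cmod_ge_0 al). pose proof (Cmod_ge_0 a). pose proof (Cmod_ge_0 b). lra. Qed.

Lemma avoids_poles_shiftn k : avoids_poles a b (shiftn k).
Proof. induction k. unfold shiftn, natC. simpl. rewrite Cplus_0_r. auto.
  unfold shiftn in *. rewrite natC_S. replace (al + (natC k + 1)) with (al + natC k + 1) by ring. apply avoids_poles_shift. auto. Qed.

Lemma Re_shiftn_ge k (c : C) j : (Cmod c <= Cmod a + Cmod b)%R ->
  (INR k + INR j - param_size <= Re (shiftn k + c + natC j))%R.
Proof.
  intros Hc. unfold shiftn. rewrite !re_plus, !Re_natC. pose proof (Re_ge_negmod al). pose proof (Re_ge_negmod c).
  unfold param_size. lra.
Qed.

Lemma Cmod_shiftn_ge k (c : C) j : (Cmod c <= Cmod a + Cmod b)%R ->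
  (INR k + INR j - param_size <= Cmod (shiftn k + c + natC j))%R.
Proof. intros Hc. eapply Rle_trans. apply (Re_shiftn_ge k c j Hc). apply Re_le_Cmod. Qed.

Lemma Cmod_a_le : (Cmod a <= Cmod a + Cmod b)%R. Proof. pose proof (Cmod_ge_0 b). lra. Qed.
Lemma Cmod_b_le : (Cmod b <= Cmod a + Cmod b)%R. Proof. pose proof (Cmod_ge_0 a). lra. Qed.
Lemma Cmod_opp_a_le : (Cmod (- a) <= Cmod a + Cmod b)%R. Proof. rewrite Cmod_opp. apply Cmod_a_le. Qed.
Lemma Cmod_opp_b_le : (Cmod (- b) <= Cmod a + Cmod b)%R. Proof. rewrite Cmod_opp. apply Cmod_b_le. Qed.

Definition wz_coeff (n : nat) : C := sgn n * (natC (fact n) * natC (fact n)) * num_poch a b n / natC (fact (2 * n)).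

Lemma wz_base_eq n x : avoids_poles a b x -> wz_base a b n x = wz_coeff n / den_poch a b x (S n).
Proof. intros H. unfold wz_base, wz_coeff. pose proof (natC_fact_neq0 (2 * n)). pose proof (den_poch_neq0 a b x (S n) H). field. auto. Qed.

Lemma Cmod_den_poch_ge N k : (2 * param_size + 2 <= INR k)%R ->
  (INR k / 2 * (INR k / 2) * (INR k / 2) * (INR k / 2) <= Cmod (den_poch a b (shiftn k) (S N)))%R.
Proof.
  intros Hk. pose proof param_size_nonneg.
  assert (G : forall c, (Cmod c <= Cmod a + Cmod b)%R -> (INR k / 2 <= Cmod (poch (shiftn k + c) (S N)))%R).
  { intros c Hc. eapply Rle_trans. 2: apply poch_lower.
    - pose proof (Cmod_shiftn_ge k c O Hc). simpl in H0. unfold natC in H0. simpl in H0. rewrite Cplus_0_r in H0. lra.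
    - intros j. pose proof (Cmod_shiftn_ge k c j Hc). pose proof (pos_INR j). lra. }
  unfold den_poch. rewrite !Cmod_mult.
  replace (shiftn k - a) with (shiftn k + - a) by ring. replace (shiftn k - b) with (shiftn k + - b) by ring.
  pose proof (G a Cmod_a_le). pose proof (G (- a) Cmod_opp_a_le). pose proof (G b Cmod_b_le). pose proof (G (- b) Cmod_opp_b_le).
  assert (0 <= INR k / 2)%R by lra.
  repeat apply Rmult_le_compat; try apply Rmult_le_pos; try apply Rmult_le_pos; lra.
Qed.

Lemma Cmod_wz_base_le N k : (2 * param_size + 2 <= INR k)%R ->
  (Cmod (wz_base a b N (shiftn k)) <= 16 * Cmod (wz_coeff N) / (INR k * INR k * INR k * INR k))%R.
Proof.
  intros Hk. rewrite wz_base_eq by apply avoids_poles_shiftn. pose proof (Cmod_den_poch_ge N k Hk). pose proof param_size_nonneg.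
  assert (Hpos : (0 < INR k / 2 * (INR k / 2) * (INR k / 2) * (INR k / 2))%R) by (repeat apply Rmult_lt_0_compat; lra).
  rewrite Cmod_div by (apply den_poch_neq0, avoids_poles_shiftn).
  replace (16 * Cmod (wz_coeff N) / (INR k * INR k * INR k * INR k))%R with (Cmod (wz_coeff N) / (INR k / 2 * (INR k / 2) * (INR k / 2) * (INR k / 2)))%R by (field; lra).
  unfold Rdiv. apply Rmult_le_compat_l. apply Cmod_ge_0. apply Rinv_le_contravar; lra.
Qed.

End WZBaseBounds.

Lemma natC_p1 N : natC N + 1 = RtoC (INR N + 1).
Proof. unfold natC. rewrite RtoC_plus. reflexivity. Qed.

Lemma Cmod_2n1 N : Cmod (2 * natC N + 1) = (2 * INR N + 1)%R.
Proof. unfold natC. rewrite <- RtoC_mult, <- RtoC_plus, Cmod_R. apply Rabs_pos_eq. pose proof (pos_INR N). lra. Qed.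
Lemma Cmod_2n2 N : Cmod (2 * natC N + 2) = (2 * INR N + 2)%R.
Proof. unfold natC. rewrite <- RtoC_mult, <- RtoC_plus, Cmod_R. apply Rabs_pos_eq. pose proof (pos_INR N). lra. Qed.

Lemma Cmod_shift_le (m : R) (u : C) : (0 <= m)%R -> (Cmod (RtoC m + u) <= m + Cmod u)%R.
Proof. intros. eapply Rle_trans. apply Cmod_triangle. rewrite Cmod_R, Rabs_pos_eq; lra. Qed.

Lemma pow4_le (p q : R) : (0 <= p)%R -> (p <= q)%R -> (p * p * p * p <= q * q * q * q)%R.
Proof. intros. apply prod4_le; lra. Qed.

Lemma Cmod_wz_step_num_le a b N :
  (Cmod (wz_step_num a b N) <=
   (INR N + 1) * (INR N + 1) *
   ((INR N + 1 + (Cmod a + Cmod b)) * (INR N + 1 + (Cmod a + Cmod b)) *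
    (INR N + 1 + (Cmod a + Cmod b)) * (INR N + 1 + (Cmod a + Cmod b))))%R.
Proof.
  set (A := (Cmod a + Cmod b)%R). set (m := (INR N + 1)%R).
  assert (Hm : (1 <= m)%R) by (unfold m; pose proof (pos_INR N); lra).
  unfold wz_step_num. rewrite Cmod_mult, Cmod_opp, !Cmod_mult. rewrite !natC_p1. fold m.
  rewrite Cmod_R, Rabs_pos_eq by lra.
  apply Rmult_le_compat_l. nra.
  replace (RtoC m + a - b) with (RtoC m + (a - b)) by ring. replace (RtoC m - a + b) with (RtoC m + (- a + b)) by ring.
  replace (RtoC m - a - b) with (RtoC m + (- a - b)) by ring. replace (RtoC m + a + b) with (RtoC m + (a + b)) by ring.
  assert (B1 : (Cmod (a + b) <= A)%R) by apply Cmod_triangle.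
  assert (B2 : (Cmod (a - b) <= A)%R) by apply Cmod_minus_triangle.
  assert (B3 : (Cmod (- a + b) <= A)%R) by (eapply Rle_trans; [apply Cmod_triangle|]; rewrite Cmod_opp; unfold A; lra).
  assert (B4 : (Cmod (- a - b) <= A)%R) by (eapply Rle_trans; [apply Cmod_minus_triangle|]; rewrite Cmod_opp; unfold A; lra).
  pose proof (Cmod_shift_le m (a + b)). pose proof (Cmod_shift_le m (a - b)).
  pose proof (Cmod_shift_le m (- a + b)). pose proof (Cmod_shift_le m (- a - b)).
  apply prod4_le; split; try apply Cmod_ge_0; try lra.
Qed.

Lemma Cmod_wz_step_den_ge al a b N k : (param_size al a b <= INR N + 1)%R ->
  ((2 * (INR N + 1) - 1) * (2 * (INR N + 1)) *
   ((INR N + 1 - param_size al a b) * (INR N + 1 - param_size al a b) *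
    (INR N + 1 - param_size al a b) * (INR N + 1 - param_size al a b))
   <= Cmod (wz_step_den a b N (shiftn al k)))%R.
Proof.
  intros Hr. set (r := param_size al a b) in *. set (m := (INR N + 1)%R) in *.
  assert (Hm : (1 <= m)%R) by (unfold m; pose proof (pos_INR N); lra).
  unfold wz_step_den. rewrite !Cmod_mult, Cmod_2n1, Cmod_2n2.
  replace (2 * INR N + 1)%R with (2 * m - 1)%R by (unfold m; ring).
  replace (2 * INR N + 2)%R with (2 * m)%R by (unfold m; ring).
  apply Rmult_le_compat_l. nra.
  replace (shiftn al k - a) with (shiftn al k + - a) by ring.
  replace (shiftn al k - b) with (shiftn al k + - b) by ring.
  assert (G : forall c, (Cmod c <= Cmod a + Cmod b)%R -> (m - r <= Cmod (shiftn al k + c + natC (S N)))%R).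
  { intros c Hc. pose proof (Cmod_shiftn_ge al a b k c (S N) Hc). rewrite S_INR in H.
    fold r in H. pose proof (pos_INR k). unfold m. lra. }
  pose proof (G a (Cmod_a_le a b)). pose proof (G (- a) (Cmod_opp_a_le a b)).
  pose proof (G b (Cmod_b_le a b)). pose proof (G (- b) (Cmod_opp_b_le a b)).
  repeat apply Rmult_le_compat; try apply Rmult_le_pos; try apply Rmult_le_pos; lra.
Qed.

(* 41/100 > (1/3) (21/20)^4, from m^2 / ((2m - 1) 2m) <= 1/3 and (m + A) / (m - r) <= 21/20. *)
Lemma wz_step_ratio_le (m A r : R) : (2 <= m)%R -> (0 < m - r)%R -> (m + A <= 21 / 20 * (m - r))%R ->
  (0 <= m + A)%R ->
  (m * m * ((m + A) * (m + A) * (m + A) * (m + A)) /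
   ((2 * m - 1) * (2 * m) * ((m - r) * (m - r) * (m - r) * (m - r))) <= 41 / 100)%R.
Proof.
  intros Hm2 Hmr0 Hmr HmA.
  pose proof (pow4_le (m + A) (21 / 20 * (m - r)) HmA Hmr) as P4.
  assert (E1 : (m * m / ((2 * m - 1) * (2 * m)) <= 1 / 3)%R).
  { apply Rmult_le_reg_r with ((2 * m - 1) * (2 * m))%R. nra. unfold Rdiv. rewrite Rmult_assoc, Rinv_l by nra. nra. }
  set (q := ((m - r) * (m - r) * (m - r) * (m - r))%R) in *.
  assert (Hq : (0 < q)%R) by (unfold q; repeat apply Rmult_lt_0_compat; lra).
  replace (21 / 20 * (m - r) * (21 / 20 * (m - r)) * (21 / 20 * (m - r)) * (21 / 20 * (m - r)))%R
    with (194481 / 160000 * q)%R in P4 by (unfold q; field).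
  replace (m * m * ((m + A) * (m + A) * (m + A) * (m + A)) / ((2 * m - 1) * (2 * m) * q))%R
    with ((m * m / ((2 * m - 1) * (2 * m))) * (((m + A) * (m + A) * (m + A) * (m + A)) / q))%R by (field; split; lra).
  assert (E2 : ((m + A) * (m + A) * (m + A) * (m + A) / q <= 194481 / 160000)%R).
  { apply Rmult_le_reg_r with q. auto. unfold Rdiv. rewrite Rmult_assoc, Rinv_l by lra. lra. }
  assert (0 <= m * m / ((2 * m - 1) * (2 * m)))%R by (apply Rdiv_le_0_compat; nra).
  assert (0 <= (m + A) * (m + A) * (m + A) * (m + A) / q)%R
    by (apply Rdiv_le_0_compat; [|lra]; apply Rmult_le_pos; [apply Rmult_le_pos; [apply Rmult_le_pos|]|]; lra).
  apply Rle_trans with (1 / 3 * (194481 / 160000))%R. apply Rmult_le_compat; lra. lra.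
Qed.

Section WZRatio.
Variables al a b : C.
Hypothesis Hg : avoids_poles a b al.
Variable N : nat.
(* Ensures [N + 1 + |a| + |b| <= 21/20 (N + 1 - param_size)], see [wz_step_ratio_le]. *)
Hypothesis HN : (20 * (Cmod a + Cmod b) + 21 * param_size al a b + 2 * Cmod al + 5 <= INR N)%R.

Lemma Cmod_wz_step_le k :
  (Cmod (wz_step_num a b N) / Cmod (wz_step_den a b N (shiftn al k)) <= 41 / 100)%R.
Proof.
  set (A := (Cmod a + Cmod b)%R) in *. set (r := param_size al a b) in *. set (m := (INR N + 1)%R).
  pose proof (param_size_nonneg al a b) as Hr. fold r in Hr.
  assert (HA : (0 <= A)%R) by (unfold A; pose proof (Cmod_ge_0 a); pose proof (Cmod_ge_0 b); lra).
  pose proof (Cmod_ge_0 al).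
  assert (Hd0 : (0 < (2 * m - 1) * (2 * m) * ((m - r) * (m - r) * (m - r) * (m - r)))%R)
    by (repeat apply Rmult_lt_0_compat; unfold m; lra).
  pose proof (Cmod_wz_step_den_ge al a b N k ltac:(fold r; lra)) as HD. fold r m in HD.
  eapply Rle_trans; [|apply (wz_step_ratio_le m A r); unfold m; lra].
  unfold Rdiv. apply Rmult_le_compat; try apply Cmod_ge_0.
  - left; apply Rinv_0_lt_compat; lra.
  - apply Cmod_wz_step_num_le.
  - apply Rinv_le_contravar; auto.
Qed.

Lemma Cmod_wz_F_succ_le_half k :
  (Cmod (wz_F a b (S N) (shiftn al k)) <= Cmod (wz_F a b N (shiftn al k)) / 2)%R.
Proof.
  set (x := shiftn al k). pose proof (Cmod_wz_step_le k) as HR. fold x in HR.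
  pose proof (param_size_nonneg al a b). pose proof (Cmod_ge_0 al).
  pose proof (Cmod_ge_0 a). pose proof (Cmod_ge_0 b).
  assert (HDEN : (0 < Cmod (wz_step_den a b N x))%R).
  { eapply Rlt_le_trans; [|apply Cmod_wz_step_den_ge; lra].
    repeat apply Rmult_lt_0_compat; lra. }
  assert (HDEN0 : wz_step_den a b N x <> 0) by (apply neq0_of_Cmod_ge with (1 := HDEN); lra).
  assert (Ht : (5 <= Cmod (2 * x + natC N))%R).
  { eapply Rle_trans. 2: apply Re_le_Cmod. unfold x, shiftn. rewrite !re_plus, Re_natC.
    replace (Re (2 * (al + natC k))) with (2 * (Re al + INR k))%R by (unfold Re, natC; simpl; ring).
    pose proof (Re_ge_negmod al). pose proof (Cmod_ge_0 al). pose proof (pos_INR k). lra. }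
  assert (Ht1 : (Cmod (2 * x + natC (S N)) <= Cmod (2 * x + natC N) + 1)%R).
  { rewrite natC_S. replace (2 * x + (natC N + 1)) with ((2 * x + natC N) + 1) by ring.
    eapply Rle_trans. apply Cmod_triangle. rewrite Cmod_1. lra. }
  unfold wz_F. rewrite wz_base_succ_n by apply avoids_poles_shiftn, Hg. fold x.
  set (beta := wz_base a b N x).
  replace (2 * (2 * x + natC (S N)) * (beta * wz_step_num a b N / wz_step_den a b N x))
    with (2 * beta * (2 * x + natC (S N)) * (wz_step_num a b N / wz_step_den a b N x)) by (field; auto).
  replace (2 * (2 * x + natC N) * beta) with (2 * beta * (2 * x + natC N)) by ring.
  rewrite (Cmod_mult _ (_ / _)), Cmod_div by auto.
  rewrite !(Cmod_mult (2 * beta)).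
  pose proof (Cmod_ge_0 (2 * beta)).
  set (t := Cmod (2 * x + natC N)) in *.
  assert (0 <= Cmod (wz_step_num a b N) / Cmod (wz_step_den a b N x))%R
    by (apply Rdiv_le_0_compat; [apply Cmod_ge_0|lra]).
  assert (Cmod (2 * x + natC (S N)) * (Cmod (wz_step_num a b N) / Cmod (wz_step_den a b N x)) <= t / 2)%R.
  { apply Rle_trans with ((t + 1) * (41 / 100))%R; [|lra].
    apply Rmult_le_compat; try lra. apply Cmod_ge_0. }
  rewrite Rmult_assoc. apply Rle_trans with (Cmod (2 * beta) * (t / 2))%R.
  - apply Rmult_le_compat_l; lra.
  - right. field.
Qed.

End WZRatio.

Lemma exists_nat_ge (r : R) : exists n : nat, (r <= INR n)%R.
Proof.
  destruct (archimed r) as [H1 _]. destruct (Z_lt_le_dec (up r) 0).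
  - exists O. simpl. apply IZR_lt in l. lra.
  - exists (Z.to_nat (up r)). rewrite INR_IZR_INZ, Z2Nat.id by lia. lra.
Qed.

Lemma rsum_mono f m n : (forall k, (0 <= f k)%R) -> (m <= n)%nat -> (rsum f m <= rsum f n)%R.
Proof.
  intros H Hmn. replace n with (m + (n - m))%nat by lia. rewrite rsum_split.
  pose proof (rsum_nonneg (fun j => f (m + j)%nat) (n - m) ltac:(intros; apply H)). lra.
Qed.

Section WZTailBounds.
Variables al a b : C.
Hypothesis Hg : avoids_poles a b al.

Lemma Cmod_shiftn_le k : (Cmod (shiftn al k) <= Cmod al + INR k)%R.
Proof. unfold shiftn. eapply Rle_trans. apply Cmod_triangle. rewrite Cmod_natC. lra. Qed.

Lemma wz_F_abs_sum_bounded N : exists B, forall K, (rsum (fun k => Cmod (wz_F a b N (shiftn al k))) K <= B)%R.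
Proof.
  pose proof (param_size_nonneg al a b) as Hr.
  destruct (exists_nat_ge (2 * param_size al a b + 2 + 2 * Cmod al + INR N + 2)) as [k1 Hk1].
  pose proof (Cmod_ge_0 al). pose proof (pos_INR N).
  set (S1 := rsum (fun k => Cmod (wz_F a b N (shiftn al k))) k1).
  set (C1 := (288 * Cmod (wz_coeff a b N))%R).
  assert (Big : forall k, (k1 <= k)%nat -> (Cmod (wz_F a b N (shiftn al k)) <= C1 * tele_weight k)%R).
  { intros k Hk. apply le_INR in Hk.
    assert (Hk2 : (2 * param_size al a b + 2 <= INR k)%R) by lra.
    pose proof (Cmod_wz_base_le al a b Hg N k Hk2) as HB.
    unfold wz_F. rewrite !Cmod_mult, Cmod_2.
    assert (H2x : (Cmod (2 * shiftn al k + natC N) <= 3 * INR k)%R).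
    { eapply Rle_trans. apply Cmod_triangle. rewrite Cmod_mult, Cmod_2, Cmod_natC. pose proof (Cmod_shiftn_le k). lra. }
    set (kk := INR k) in *. assert (Hkk : (2 <= kk)%R) by lra.
    set (nN := Cmod (wz_coeff a b N)) in *. assert (HnN : (0 <= nN)%R) by apply Cmod_ge_0.
    apply Rle_trans with (2 * (3 * kk) * (16 * nN / (kk * kk * kk * kk)))%R.
    { pose proof (Cmod_ge_0 (2 * shiftn al k + natC N)). pose proof (Cmod_ge_0 (wz_base a b N (shiftn al k))). apply Rmult_le_compat; try lra. }
    unfold C1, tele_weight. fold nN. replace (INR k) with kk by reflexivity.
    replace (2 * (3 * kk) * (16 * nN / (kk * kk * kk * kk)))%R with (96 * nN / (kk * kk * kk))%R by (field; lra).
    replace (288 * nN * (1 / ((kk + 1) * (kk + 2))))%R with (96 * nN / ((kk + 1) * (kk + 2) / 3))%R by (field; lra).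
    unfold Rdiv. apply Rmult_le_compat_l. lra. apply Rinv_le_contravar. nra. nra. }
  exists (S1 + C1)%R. intros K.
  assert (HC1 : (0 <= C1)%R) by (unfold C1; pose proof (Cmod_ge_0 (wz_coeff a b N)); lra).
  assert (HS1 : (0 <= S1)%R) by (apply rsum_nonneg; intros; apply Cmod_ge_0).
  destruct (Compare_dec.le_lt_dec K k1).
  - eapply Rle_trans. apply rsum_mono. intros; apply Cmod_ge_0. exact l. unfold S1. lra.
  - replace K with (k1 + (K - k1))%nat by lia. rewrite rsum_split. fold S1.
    assert (rsum (fun j => Cmod (wz_F a b N (shiftn al (k1 + j)))) (K - k1) <= C1)%R.
    { eapply Rle_trans. apply rsum_le with (g := fun j => (C1 * tele_weight (k1 + j))%R). intros; apply Big; lia.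
      assert (E : forall n, rsum (fun j => C1 * tele_weight (k1 + j))%R n = (C1 * rsum (fun j => tele_weight (k1+j)) n)%R).
      { induction n; simpl. ring. rewrite IHn. ring. }
      rewrite E. pose proof (rsum_tele_weight_le k1 (K - k1)). pose proof (pos_INR k1).
      assert (1 / (INR k1 + 1) <= 1)%R. { unfold Rdiv. rewrite Rmult_1_l. apply Rinv_le_1. lra. }
      assert (rsum (fun j => tele_weight (k1 + j)) (K - k1) <= 1)%R by lra.
      rewrite <- (Rmult_1_r C1) at 2. apply Rmult_le_compat_l; auto. }
    lra.
Qed.

Lemma Cmod_wz_quad_le n x (K : R) : (1 <= K)%R -> (Cmod x <= 2 * K)%R ->
  (Cmod (wz_quad a b n x) <= (5 * INR n * INR n + 16 * INR n + 13 + Cmod a * Cmod a + Cmod b * Cmod b) * (K * K))%R.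
Proof.
  intros HK Hx. unfold wz_quad. set (X := Cmod x) in *. set (nn := INR n).
  pose proof (Cmod_ge_0 x). fold X in H. pose proof (pos_INR n). fold nn in H0.
  pose proof (Cmod_ge_0 a). pose proof (Cmod_ge_0 b).
  assert (T1 : (Cmod (5 * natC n * natC n) <= 5 * nn * nn)%R).
  { rewrite !Cmod_mult, Cmod_natC, Cmod_R, Rabs_pos_eq by lra. fold nn. lra. }
  assert (T2 : (Cmod (2 * (2 + 3 * x) * natC n) <= 2 * (2 + 3 * X) * nn)%R).
  { rewrite !Cmod_mult, Cmod_natC, Cmod_2. fold nn. apply Rmult_le_compat_r. lra. apply Rmult_le_compat_l. lra.
    eapply Rle_trans. apply Cmod_triangle. rewrite Cmod_2, Cmod_mult, Cmod_R, Rabs_pos_eq by lra. fold X. lra. }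
  assert (T3 : (Cmod ((1 + x) * (1 + x)) <= (1 + X) * (1 + X))%R).
  { rewrite Cmod_mult. assert (Cmod (1 + x) <= 1 + X)%R by (eapply Rle_trans; [apply Cmod_triangle|]; rewrite Cmod_1; fold X; lra).
    pose proof (Cmod_ge_0 (1 + x)). nra. }
  assert (T4 : (Cmod (x * x) <= X * X)%R) by (rewrite Cmod_mult; fold X; lra).
  assert (T5 : (Cmod (a * a) <= Cmod a * Cmod a)%R) by (rewrite Cmod_mult; lra).
  assert (T6 : (Cmod (b * b) <= Cmod b * Cmod b)%R) by (rewrite Cmod_mult; lra).
  eapply Rle_trans. apply Cmod_minus_triangle. eapply Rle_trans. apply Rplus_le_compat_r. apply Cmod_minus_triangle.
  eapply Rle_trans. apply Rplus_le_compat_r. apply Rplus_le_compat_r. apply Cmod_triangle.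
  eapply Rle_trans. apply Rplus_le_compat_r. apply Rplus_le_compat_r. apply Rplus_le_compat_r. apply Cmod_triangle.
  eapply Rle_trans. apply Rplus_le_compat_r. apply Rplus_le_compat_r. apply Rplus_le_compat_r. apply Rplus_le_compat_r. apply Cmod_triangle.
  assert (X * X <= 4 * (K * K))%R by nra.
  assert ((1 + X) * (1 + X) <= 9 * (K * K))%R by nra.
  assert (HKK : (1 <= K * K)%R) by nra.
  assert (HKK2 : (K <= K * K)%R) by nra.
  assert (X * nn <= 2 * K * nn)%R by (apply Rmult_le_compat_r; lra).
  assert (K * nn <= K * K * nn)%R by (apply Rmult_le_compat_r; lra).
  assert (nn <= K * K * nn)%R by (rewrite <- (Rmult_1_l nn) at 1; apply Rmult_le_compat_r; lra).
  assert (2 * (2 + 3 * X) * nn <= (4 * nn + 12 * nn) * (K * K))%R by nra.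
  assert (5 * nn * nn <= 5 * nn * nn * (K * K))%R by nra.
  assert (Cmod a * Cmod a <= Cmod a * Cmod a * (K * K))%R by nra.
  assert (Cmod b * Cmod b <= Cmod b * Cmod b * (K * K))%R by nra.
  nra.
Qed.

Lemma wz_G_vanishes n : Clim_seq (fun K => wz_G a b n (shiftn al K)) 0.
Proof.
  pose proof (param_size_nonneg al a b) as Hr. pose proof (Cmod_ge_0 al).
  destruct (exists_nat_ge (2 * param_size al a b + 2 + Cmod al)) as [k1 Hk1].
  set (Cn := (5 * INR n * INR n + 16 * INR n + 13 + Cmod a * Cmod a + Cmod b * Cmod b)%R).
  assert (HCn : (0 <= Cn)%R). { unfold Cn. pose proof (pos_INR n). pose proof (Cmod_ge_0 a). pose proof (Cmod_ge_0 b). nra. }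
  set (D := (32 * Cn * Cmod (wz_coeff a b n))%R).
  assert (HD : (0 <= D)%R) by (unfold D; pose proof (Cmod_ge_0 (wz_coeff a b n)); nra).
  assert (Big : forall K, (k1 <= K)%nat -> (Cmod (wz_G a b n (shiftn al K)) <= D / (INR K + 1))%R).
  { intros K HK. apply le_INR in HK. set (kk := INR K) in *.
    assert (Hk2 : (2 * param_size al a b + 2 <= kk)%R) by lra.
    pose proof (Cmod_wz_base_le al a b Hg n K Hk2) as HB. fold kk in HB.
    pose proof (Cmod_wz_quad_le n (shiftn al K) kk ltac:(lra) ltac:(pose proof (Cmod_shiftn_le K); fold kk in H0; lra)) as HP. fold Cn in HP.
    unfold wz_G. rewrite Cmod_div by apply two_n1_neq0. rewrite Cmod_mult, Cmod_2n1.
    pose proof (pos_INR n). 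
    set (nN := Cmod (wz_coeff a b n)) in *. assert (HnN : (0 <= nN)%R) by apply Cmod_ge_0.
    apply Rle_trans with (Cmod (wz_quad a b n (shiftn al K)) * Cmod (wz_base a b n (shiftn al K)))%R.
    { unfold Rdiv. rewrite <- (Rmult_1_r (Cmod (wz_quad a b n (shiftn al K)) * Cmod (wz_base a b n (shiftn al K)))) at 2.
      apply Rmult_le_compat_l. apply Rmult_le_pos; apply Cmod_ge_0. apply Rinv_le_1. lra. }
    apply Rle_trans with (Cn * (kk * kk) * (16 * nN / (kk * kk * kk * kk)))%R.
    { apply Rmult_le_compat; try apply Cmod_ge_0; auto. }
    unfold D. replace (Cn * (kk * kk) * (16 * nN / (kk * kk * kk * kk)))%R with (16 * Cn * nN / (kk * kk))%R by (field; lra).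
    replace (32 * Cn * nN / (kk + 1))%R with (16 * Cn * nN / ((kk + 1) / 2))%R by (field; lra).
    unfold Rdiv. apply Rmult_le_compat_l. nra. apply Rinv_le_contravar; nra. }
  intros eps. destruct (div_succ_eventually_lt D eps HD) as [N1 K1].
  exists (max N1 k1). intros K HK. replace (wz_G a b n (shiftn al K) - 0) with (wz_G a b n (shiftn al K)) by ring.
  eapply Rle_lt_trans. apply Big. lia. apply K1. lia.
Qed.

End WZTailBounds.

Lemma pow2_ge d : (INR d + 1 <= 2 ^ d)%R.
Proof. induction d. simpl. lra. rewrite S_INR. simpl. pose proof (pos_INR d). lra. Qed.

Lemma Clim_csum (g : nat -> nat -> C) N : (forall n, Clim_seq (g n) 0) -> Clim_seq (fun K => csum (fun n => g n K) N) 0.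
Proof.
  intros H. induction N; simpl.
  - apply Clim_const.
  - replace (RtoC 0) with (RtoC 0 + RtoC 0) by ring. apply Clim_plus; auto.
Qed.

Section WZLimit.
Variables al a b : C.
Hypothesis Hg : avoids_poles a b al.

Definition Fk (n k : nat) : C := wz_F a b n (shiftn al k).
Definition Gk (n k : nat) : C := wz_G a b n (shiftn al k).

Lemma wz_double_sum N K : csum (Fk 0) K = csum (Fk N) K + csum (fun n => Gk n 0 - Gk n K) N.
Proof.
  induction N; simpl.
  - ring.
  - rewrite IHN.
    assert (E : csum (Fk N) K = csum (Fk (S N)) K + (Gk N 0 - Gk N K)).
    { assert (T : csum (fun k => Fk N k - Fk (S N) k) K = Gk N 0 - Gk N K).
      { rewrite <- (csum_tele (Gk N) K). apply csum_ext. intros k _. unfold Fk, Gk.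
        rewrite wz_pair by (apply avoids_poles_shiftn; auto). unfold shiftn. rewrite natC_S. 
        replace (al + (natC k + 1)) with (al + natC k + 1) by ring. reflexivity. }
      rewrite csum_minus in T. rewrite <- T. ring. }
    rewrite E. ring.
Qed.

Lemma wz_F_geometric_decay N0 : (forall N k, (N0 <= N)%nat -> (Cmod (Fk (S N) k) <= Cmod (Fk N k) / 2)%R) ->
  forall d k, (Cmod (Fk (N0 + d) k) * 2 ^ d <= Cmod (Fk N0 k))%R.
Proof.
  intros H d k. induction d.
  - rewrite Nat.add_0_r. simpl. lra.
  - rewrite Nat.add_succ_r. pose proof (H (N0 + d)%nat k ltac:(lia)). simpl.
    pose proof (pow_lt 2 d ltac:(lra)). nra.
Qed.

Lemma wz_limit L : Clim_seq (csum (Fk 0)) L -> Clim_seq (csum (fun n => Gk n 0)) L.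
Proof.
  intros HL.
  destruct (exists_nat_ge (20 * (Cmod a + Cmod b) + 21 * param_size al a b + 2 * Cmod al + 5)) as [N0 HN0].
  assert (Hrat : forall N k, (N0 <= N)%nat -> (Cmod (Fk (S N) k) <= Cmod (Fk N k) / 2)%R).
  { intros N k HN. apply Cmod_wz_F_succ_le_half; auto. apply le_INR in HN. lra. }
  destruct (wz_F_abs_sum_bounded al a b Hg N0) as [B HB].
  assert (HB0 : (0 <= B)%R). { pose proof (HB O). simpl in H. lra. }
  assert (Tail : forall d K, (Cmod (csum (Fk (N0 + d)) K) <= B / (INR d + 1))%R).
  { intros d K. eapply Rle_trans. apply Cmod_csum.
    pose proof (pow2_ge d). pose proof (pos_INR d).
    apply Rle_trans with (rsum (fun k => Cmod (Fk N0 k)) K / 2 ^ d)%R.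
    { assert (E : forall K, (rsum (fun k => Cmod (Fk (N0 + d) k)) K * 2 ^ d <= rsum (fun k => Cmod (Fk N0 k)) K)%R).
      { induction K0; simpl. lra. pose proof (wz_F_geometric_decay N0 Hrat d K0). lra. }
      specialize (E K). apply Rmult_le_reg_r with (2 ^ d)%R. lra. unfold Rdiv. rewrite Rmult_assoc, Rinv_l, Rmult_1_r by lra. exact E. }
    unfold Rdiv. apply Rmult_le_compat. apply rsum_nonneg; intros; apply Cmod_ge_0. left; apply Rinv_0_lt_compat; lra.
    apply HB. apply Rinv_le_contravar; lra. }
  intros eps.
  destruct (div_succ_eventually_lt B (pos_div_2 eps) HB0) as [D1 KD].
  exists (N0 + D1)%nat. intros N HN.
  set (d := (N - N0)%nat). assert (HNd : N = (N0 + d)%nat) by (unfold d; lia).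
  specialize (KD d ltac:(unfold d; lia)). simpl in KD.
  assert (HG0 : Clim_seq (fun K => csum (fun n => Gk n K) N) 0).
  { apply Clim_csum. intros n. apply wz_G_vanishes; auto. }
  assert (Hle : (Cmod (L - csum (fun n => Gk n 0) N) <= B / (INR d + 1) + eps / 4)%R).
  { apply (Clim_le _ _ _ _ HL).
    destruct (HG0 (mkposreal (eps / 4) ltac:(destruct eps; simpl; lra))) as [K1 HK1].
    exists K1. intros K HK. specialize (HK1 K HK). simpl in HK1. replace (csum (fun n => Gk n K) N - 0) with (csum (fun n => Gk n K) N) in HK1 by ring.
    rewrite (wz_double_sum N K), csum_minus.
    replace (csum (Fk N) K + (csum (fun n => Gk n 0) N - csum (fun n => Gk n K) N) - csum (fun n => Gk n 0) N)
      with (csum (Fk N) K - csum (fun n => Gk n K) N) by ring.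
    eapply Rle_trans. apply Cmod_minus_triangle. rewrite HNd at 1. pose proof (Tail d K). lra. }
  rewrite Cmod_sub_sym. destruct eps; simpl in *. lra.
Qed.

End WZLimit.

(** * The 8F7 series and the theorem *)

Lemma poch_1 n : poch 1 n = natC (fact n).
Proof. induction n. reflexivity. simpl poch. rewrite IHn, fact_S. rewrite Cmult_comm. f_equal. ring. Qed.

Lemma natC_1 : natC 1 = 1.
Proof. unfold natC. simpl. reflexivity. Qed.

Lemma poch_three_halves n : poch (RtoC (3 / 2)) n * natC (fact n) * Cpow 4 n = natC (fact (2 * n + 1)).
Proof.
  induction n.
  - simpl. unfold natC. simpl. ring.
  - replace (2 * S n + 1)%nat with (S (S (2 * n + 1))) by lia.
    rewrite !fact_S, <- IHn. simpl poch. simpl Cpow.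
    replace (natC (S (2 * n + 1))) with (2 * natC n + 2) by (rewrite natC_S, natC_plus, natC_double, natC_1; ring).
    replace (natC (2 * n + 1)) with (2 * natC n + 1) by (rewrite natC_plus, natC_double, natC_1; ring).
    replace (RtoC (3 / 2)) with (3 / 2 : C) by (rewrite RtoC_div by lra; reflexivity).
    field.
Qed.

Lemma Cpow_neg_quarter n : Cpow (RtoC (- (1 / 4))) n * Cpow 4 n = sgn n.
Proof.
  induction n. simpl. unfold sgn. simpl. ring.
  unfold sgn in *. simpl. rewrite <- IHn.
  replace (RtoC (- (1 / 4))) with (- (1 / 4) : C) by (rewrite RtoC_opp, RtoC_div by lra; reflexivity).
  replace (RtoC (-1)) with (- 1 : C) by (apply C_ext; simpl; lra).
  field.
Qed.

Lemma Cpow4_neq0 n : Cpow 4 n <> 0.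
Proof. induction n; simpl. apply C1_nz. apply Cmult_neq_0; auto. apply RtoC_pos_neq0; lra. Qed.

Lemma sum_n_csum (f : nat -> C) N : @sum_n C_AbelianMonoid f N = csum f (S N).
Proof.
  induction N.
  - rewrite sum_O. simpl. ring.
  - rewrite sum_Sn, IHN. simpl. reflexivity.
Qed.

Section HypergeometricTerms.
Variables alpha a b s : C.
Hypothesis Ha1 : ~ nonpos_int (alpha + a).
Hypothesis Ha2 : ~ nonpos_int (alpha - a).
Hypothesis Hb1 : ~ nonpos_int (alpha + b).
Hypothesis Hb2 : ~ nonpos_int (alpha - b).
Hypothesis Hs : s * s = (a * a + b * b) / RtoC 5 - ((1 - alpha) / RtoC 5) * ((1 - alpha) / RtoC 5).
Hypothesis Hp1 : ~ nonpos_int ((2 + 3 * alpha) / RtoC 5 + s).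
Hypothesis Hp2 : ~ nonpos_int ((2 + 3 * alpha) / RtoC 5 - s).

Let beta := (2 + 3 * alpha) / RtoC 5.

Lemma R5_neq0 : RtoC 5 <> 0.
Proof. apply RtoC_pos_neq0; lra. Qed.

Lemma wz_quad_factor n : wz_quad a b n alpha = 5 * (beta + s + natC n) * (beta - s + natC n).
Proof.
  pose proof R5_neq0.
  transitivity (5 * ((beta + natC n) * (beta + natC n) - s * s)). 2: ring.
  rewrite Hs. unfold wz_quad, beta. field.
Qed.

Lemma wz_quad0_factor : (1 + alpha) * (1 + alpha) + alpha * alpha - a * a - b * b = 5 * (beta + s) * (beta - s).
Proof.
  pose proof (wz_quad_factor 0). unfold wz_quad in H. unfold natC in H. simpl in H.
  replace (beta + s) with (beta + s + RtoC 0) by ring. replace (beta - s) with (beta - s + RtoC 0) by ring.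
  rewrite <- H. ring.
Qed.

Definition upper_params := [RtoC 1; RtoC 1; 1 + a + b; 1 + a - b; 1 - a + b; 1 - a - b;
         (7 + 3 * alpha) / RtoC 5 + s; (7 + 3 * alpha) / RtoC 5 - s].
Definition lower_params := [RtoC (3 / 2); 1 + alpha + a; 1 + alpha - a; 1 + alpha + b; 1 + alpha - b;
         (2 + 3 * alpha) / RtoC 5 + s; (2 + 3 * alpha) / RtoC 5 - s].

Lemma hyp_term_wz_G n :
  hyp_term upper_params lower_params (RtoC (- (1 / 4))) n =
  (alpha * alpha - a * a) * (alpha * alpha - b * b) / ((1 + alpha) * (1 + alpha) + alpha * alpha - a * a - b * b)
  * Gk alpha a b n 0.
Proof.
  pose proof R5_neq0 as H5.
  unfold hyp_term, prodC, upper_params, lower_params. cbn [map fold_right].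
  rewrite !poch_1.
  assert (Es1 : poch ((7 + 3 * alpha) / RtoC 5 + s) n = poch (beta + s) n * (beta + s + natC n) / (beta + s)).
  { replace ((7 + 3 * alpha) / RtoC 5 + s) with (beta + s + 1) by (unfold beta; field; auto).
    rewrite <- poch_shift. field. apply nonpole_neq0, Hp1. }
  assert (Es2 : poch ((7 + 3 * alpha) / RtoC 5 - s) n = poch (beta - s) n * (beta - s + natC n) / (beta - s)).
  { replace ((7 + 3 * alpha) / RtoC 5 - s) with (beta - s + 1) by (unfold beta; field; auto).
    rewrite <- poch_shift. field. apply nonpole_neq0, Hp2. }
  rewrite Es1, Es2.
  assert (E32 : poch (RtoC (3 / 2)) n = natC (fact (2 * n + 1)) / (natC (fact n) * Cpow 4 n)).
  { rewrite <- poch_three_halves. field. split. apply Cpow4_neq0. apply natC_fact_neq0. }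
  rewrite E32.
  assert (Eq4 : Cpow (RtoC (- (1 / 4))) n = sgn n / Cpow 4 n).
  { rewrite <- Cpow_neg_quarter. field. apply Cpow4_neq0. }
  rewrite Eq4.
  assert (Ef : natC (fact (2 * n + 1)) = natC (fact (2 * n)) * (2 * natC n + 1)).
  { replace (2 * n + 1)%nat with (S (2 * n)) by lia. rewrite fact_S, natC_double. ring. }
  rewrite Ef.
  unfold Gk, wz_G, wz_base, num_poch, den_poch, shiftn.
  replace (alpha + natC 0) with alpha by (unfold natC; simpl; ring).
  rewrite wz_quad_factor, wz_quad0_factor.
  rewrite (poch_S_l (alpha + a)), (poch_S_l (alpha - a)), (poch_S_l (alpha + b)), (poch_S_l (alpha - b)).
  replace (1 + alpha + a) with (alpha + a + 1) by ring. replace (1 + alpha - a) with (alpha - a + 1) by ring.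
  replace (1 + alpha + b) with (alpha + b + 1) by ring. replace (1 + alpha - b) with (alpha - b + 1) by ring.
  fold beta.
  pose proof (nonpole_neq0 _ Hp1) as B1. pose proof (nonpole_neq0 _ Hp2) as B2. fold beta in B1, B2.
  assert (P1 : poch (beta + s) n <> 0) by (apply poch_neq0; intros; apply nonpole_add_natC; auto).
  assert (P2 : poch (beta - s) n <> 0) by (apply poch_neq0; intros; apply nonpole_add_natC; auto).
  pose proof (poch_succ_neq0 _ n Ha1). pose proof (poch_succ_neq0 _ n Ha2). pose proof (poch_succ_neq0 _ n Hb1). pose proof (poch_succ_neq0 _ n Hb2).
  pose proof (nonpole_neq0 _ Ha1). pose proof (nonpole_neq0 _ Ha2). pose proof (nonpole_neq0 _ Hb1). pose proof (nonpole_neq0 _ Hb2).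
  pose proof (natC_fact_neq0 n). pose proof (natC_fact_neq0 (2 * n)). pose proof (Cpow4_neq0 n). pose proof (two_n1_neq0 n).
  field. repeat split; auto.
Qed.

Lemma wz_quad0_neq0 : (1 + alpha) * (1 + alpha) + alpha * alpha - a * a - b * b <> 0.
Proof.
  rewrite wz_quad0_factor.
  pose proof (nonpole_neq0 _ Hp1). pose proof (nonpole_neq0 _ Hp2).
  repeat apply Cmult_neq_0; auto. apply R5_neq0.
Qed.

Lemma hypergeom_eq_wz_G_sum L : Clim_seq (csum (fun n => Gk alpha a b n 0)) L ->
  hypergeom upper_params lower_params (RtoC (- (1 / 4))) =
  (alpha * alpha - a * a) * (alpha * alpha - b * b) / ((1 + alpha) * (1 + alpha) + alpha * alpha - a * a - b * b)
  * L.
Proof.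
  intros HG. unfold hypergeom. apply lim_seq_of_Clim.
  eapply Clim_ext.
  { intros N. symmetry. rewrite sum_n_csum, (csum_ext _ _ _ (fun k _ => hyp_term_wz_G k)), csum_scal. reflexivity. }
  apply (Clim_shift_succ (fun M => _ * csum (fun n => Gk alpha a b n 0) M)). apply Clim_scal. exact HG.
Qed.

End HypergeometricTerms.

Lemma wz_F0_partial_fractions a b x : x + a <> 0 -> x - a <> 0 -> x + b <> 0 -> x - b <> 0 ->
  (a * a - b * b) / 2 * wz_F a b 0 x = / (x + a) + / (x - a) - / (x + b) - / (x - b).
Proof.
  intros H1 H2 H3 H4. unfold wz_F, wz_base, sgn, num_poch, den_poch. simpl.
  unfold natC. simpl. field. repeat split; auto.
  all: try (intros E; apply (f_equal fst) in E; simpl in E; lra).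
  all: rewrite Cplus_0_r; auto.
Qed.

Section DigammaDifference.
Variables alpha a b : C.
Hypothesis Ha1 : ~ nonpos_int (alpha + a).
Hypothesis Ha2 : ~ nonpos_int (alpha - a).
Hypothesis Hb1 : ~ nonpos_int (alpha + b).
Hypothesis Hb2 : ~ nonpos_int (alpha - b).

Lemma avoids_poles_of_nonpos : avoids_poles a b alpha.
Proof. intros m. repeat split; apply nonpole_add_natC; auto. Qed.

Lemma wz_F0_eq_inv_diff k : (a * a - b * b) / 2 * Fk alpha a b 0 k =
  / (shiftn alpha k + a) + / (shiftn alpha k - a) - / (shiftn alpha k + b) - / (shiftn alpha k - b).
Proof.
  destruct (avoids_poles_shiftn alpha a b avoids_poles_of_nonpos k O) as [G1 [G2 [G3 G4]]].
  unfold natC in G1, G2, G3, G4. simpl in G1, G2, G3, G4. rewrite Cplus_0_r in G1, G2, G3, G4.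
  apply wz_F0_partial_fractions; auto.
Qed.

(* The k-th terms of the four digamma series combine into the WZ term F(0, alpha + k + 1). *)
Lemma digamma_partial_sums_eq_wz_F n :
  csum (digamma_term (alpha + b)) n + csum (digamma_term (alpha - b)) n
  - csum (digamma_term (alpha + a)) n - csum (digamma_term (alpha - a)) n
  - (/ (alpha + b) + / (alpha - b) - / (alpha + a) - / (alpha - a))
  = (a * a - b * b) / 2 * csum (Fk alpha a b 0) (S n).
Proof.
  induction n.
  - simpl csum. rewrite (Cplus_0_l (Fk _ _ _ _ _)), wz_F0_eq_inv_diff. unfold shiftn.
    replace (alpha + natC 0) with alpha by (unfold natC; simpl; ring). ring.
  - change (csum ?f (S ?m)) with (csum f m + f m).
    rewrite Cmult_plus_distr_l, <- IHn, wz_F0_eq_inv_diff. unfold digamma_term, shiftn.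
    replace (alpha + b + RtoC (succR n)) with (alpha + natC (S n) + b) by (rewrite succR_natC, natC_S; ring).
    replace (alpha - b + RtoC (succR n)) with (alpha + natC (S n) - b) by (rewrite succR_natC, natC_S; ring).
    replace (alpha + a + RtoC (succR n)) with (alpha + natC (S n) + a) by (rewrite succR_natC, natC_S; ring).
    replace (alpha - a + RtoC (succR n)) with (alpha + natC (S n) - a) by (rewrite succR_natC, natC_S; ring).
    ring.
Qed.

Lemma digamma_diff_wz_F_series :
  Clim_seq (fun n => (a * a - b * b) / 2 * csum (Fk alpha a b 0) n)
    (digamma (alpha + b) + digamma (alpha - b) - digamma (alpha + a) - digamma (alpha - a)).
Proof.
  destruct (digamma_series _ Hb1) as [C1 [HC1 ->]].
  destruct (digamma_series _ Hb2) as [C2 [HC2 ->]].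
  destruct (digamma_series _ Ha1) as [C3 [HC3 ->]].
  destruct (digamma_series _ Ha2) as [C4 [HC4 ->]].
  apply Clim_of_shift_succ. eapply Clim_ext. { intros n. apply digamma_partial_sums_eq_wz_F. }
  replace (C1 - / (alpha + b) + (C2 - / (alpha - b)) - (C3 - / (alpha + a)) - (C4 - / (alpha - a)))
    with (C1 + C2 - C3 - C4 - (/ (alpha + b) + / (alpha - b) - / (alpha + a) - / (alpha - a))) by ring.
  apply Clim_minus; [|apply Clim_const]. repeat apply Clim_minus; try apply Clim_plus; auto.
Qed.

End DigammaDifference.

Theorem theorem6 (alpha a b s : C) :
  ~ nonpos_int (alpha + a) -> ~ nonpos_int (alpha - a) ->
  ~ nonpos_int (alpha + b) -> ~ nonpos_int (alpha - b) ->
  s * s = (a * a + b * b) / RtoC 5 - ((1 - alpha) / RtoC 5) * ((1 - alpha) / RtoC 5) ->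
  ~ nonpos_int ((2 + 3 * alpha) / RtoC 5 + s) ->
  ~ nonpos_int ((2 + 3 * alpha) / RtoC 5 - s) ->
  digamma (alpha + b) + digamma (alpha - b) - digamma (alpha + a) - digamma (alpha - a)
  = (a * a - b * b) * ((1 + alpha) * (1 + alpha) + alpha * alpha - a * a - b * b)
    / (2 * (alpha * alpha - a * a) * (alpha * alpha - b * b))
    * hypergeom
        [RtoC 1; RtoC 1; 1 + a + b; 1 + a - b; 1 - a + b; 1 - a - b;
         (7 + 3 * alpha) / RtoC 5 + s; (7 + 3 * alpha) / RtoC 5 - s]
        [RtoC (3 / 2); 1 + alpha + a; 1 + alpha - a; 1 + alpha + b; 1 + alpha - b;
         (2 + 3 * alpha) / RtoC 5 + s; (2 + 3 * alpha) / RtoC 5 - s]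
        (RtoC (- (1 / 4))).
Proof.
  intros Ha1 Ha2 Hb1 Hb2 Hs Hp1 Hp2.
  pose proof (digamma_diff_wz_F_series alpha a b Ha1 Ha2 Hb1 Hb2) as HF.
  set (D := digamma (alpha + b) + _ - _ - _) in *.
  assert (H2 : (2 : C) <> 0) by (apply RtoC_pos_neq0; lra).
  destruct (classic (a * a - b * b = 0)) as [Z | NZ].
  - assert (HD : D = 0).
    { apply (Clim_unique _ _ _ HF). eapply Clim_ext; [|apply Clim_const].
      intros n. rewrite Z. field. }
    rewrite HD, Z. unfold Cdiv. ring.
  - pose proof (Clim_scal (/ ((a * a - b * b) / 2)) _ _ HF) as HF'.
    assert (HFk : Clim_seq (csum (Fk alpha a b 0)) (/ ((a * a - b * b) / 2) * D)).
    { eapply Clim_ext; [|exact HF']. intros n. cbv beta. field. auto. }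
    pose proof (wz_limit alpha a b (avoids_poles_of_nonpos _ _ _ Ha1 Ha2 Hb1 Hb2) _ HFk) as HG.
    fold (upper_params alpha a b s) (lower_params alpha a b s).
    rewrite (hypergeom_eq_wz_G_sum alpha a b s Ha1 Ha2 Hb1 Hb2 Hs Hp1 Hp2 _ HG).
    pose proof (wz_quad0_neq0 alpha a b s Hs Hp1 Hp2).
    pose proof (nonpole_neq0 _ Ha1). pose proof (nonpole_neq0 _ Ha2).
    pose proof (nonpole_neq0 _ Hb1). pose proof (nonpole_neq0 _ Hb2).
    assert (alpha * alpha - a * a <> 0) by
      (replace (alpha * alpha - a * a) with ((alpha + a) * (alpha - a)) by ring; apply Cmult_neq_0; auto).
    assert (alpha * alpha - b * b <> 0) by
      (replace (alpha * alpha - b * b) with ((alpha + b) * (alpha - b)) by ring; apply Cmult_neq_0; auto).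
    field. repeat split; auto.
Qed.
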